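(* Let $A$ be a bounded linear operator on a complex Hilbert space $\mathcal H\neq\{0\}$. Then $W_0(A)\cap\partial W(A)\neq\emptyset$ if and only if $A$ is normaloid.
   Context: The numerical range of $A$ is $W(A)=\{\langle Ax,x\rangle : x\in\mathcal H,\ \|x\|=1\}$, and $\partial W(A)$ denotes its boundary in $\mathbb C$. The maximal numerical range $W_0(A)$ is the set of all $\lambda\in\mathbb C$ for which there exist unit vectors $x_n\in\mathcal H$ with $\|Ax_n\|\to\|A\|$ and $\langle Ax_n,x_n\rangle\to\lambda$. The operator $A$ is called normaloid if $\sigma(A)\cap\mathcal C_A\neq\emptyset$, where $\sigma(A)$ is the spectrum and $\mathcal C_A=\{z\in\mathbb C: |z|=\|A\|\}$; equivalently, if the closure of $W(A)$ meets $\mathcal C_A$, i.e. the numerical radius $\sup\{|z|: z\in W(A)\}$ equals $\|A\|$. *)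

From Stdlib Require Import Reals Lra.
Open Scope R_scope.

Record C := mkC { Re : R ; Im : R }.

Definition RtoC (r : R) : C := mkC r 0.
Definition C0 : C := mkC 0 0.
Definition C1 : C := mkC 1 0.
Definition Cadd (z w : C) : C := mkC (Re z + Re w) (Im z + Im w).
Definition Copp (z : C) : C := mkC (- Re z) (- Im z).
Definition Csub (z w : C) : C := Cadd z (Copp w).
Definition Cmul (z w : C) : C :=
  mkC (Re z * Re w - Im z * Im w) (Re z * Im w + Im z * Re w).
Definition Cconj (z : C) : C := mkC (Re z) (- Im z).
Definition Cmod (z : C) : R := sqrt (Re z * Re z + Im z * Im z).

Record HilbertSpace := {
  carrier :> Type;
  vadd : carrier -> carrier -> carrier;
  vzero : carrier;
  vopp : carrier -> carrier;
  vscal : C -> carrier -> carrier;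
  inner : carrier -> carrier -> C;
  vadd_assoc : forall x y z, vadd x (vadd y z) = vadd (vadd x y) z;
  vadd_comm : forall x y, vadd x y = vadd y x;
  vadd_zero : forall x, vadd x vzero = x;
  vadd_opp : forall x, vadd x (vopp x) = vzero;
  vscal_one : forall x, vscal C1 x = x;
  vscal_assoc : forall a b x, vscal a (vscal b x) = vscal (Cmul a b) x;
  vscal_distr_v : forall a x y, vscal a (vadd x y) = vadd (vscal a x) (vscal a y);
  vscal_distr_s : forall a b x, vscal (Cadd a b) x = vadd (vscal a x) (vscal b x);
  inner_add_l : forall x y z, inner (vadd x y) z = Cadd (inner x z) (inner y z);
  inner_scal_l : forall a x y, inner (vscal a x) y = Cmul a (inner x y);
  inner_conj_sym : forall x y, inner y x = Cconj (inner x y);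
  inner_pos : forall x, x <> vzero -> 0 < Re (inner x x);
  complete : forall u : nat -> carrier,
    (forall eps, 0 < eps -> exists N, forall n m, (n >= N)%nat -> (m >= N)%nat ->
        sqrt (Re (inner (vadd (u n) (vopp (u m))) (vadd (u n) (vopp (u m))))) < eps) ->
    exists l, forall eps, 0 < eps -> exists N, forall n, (n >= N)%nat ->
        sqrt (Re (inner (vadd (u n) (vopp l)) (vadd (u n) (vopp l)))) < eps
}.

Arguments vadd {h}. Arguments vzero {h}. Arguments vopp {h}.
Arguments vscal {h}. Arguments inner {h}.

Definition vnorm {H : HilbertSpace} (x : H) : R := sqrt (Re (inner x x)).

Definition bounded_linear {H : HilbertSpace} (A : H -> H) : Prop :=
  (forall x y, A (vadd x y) = vadd (A x) (A y)) /\
  (forall a x, A (vscal a x) = vscal a (A x)) /\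
  (exists M, forall x, vnorm (A x) <= M * vnorm x).

Definition is_opnorm {H : HilbertSpace} (A : H -> H) (r : R) : Prop :=
  is_lub (fun t => exists x : H, vnorm x = 1 /\ t = vnorm (A x)) r.

Definition numrange {H : HilbertSpace} (A : H -> H) (z : C) : Prop :=
  exists x : H, vnorm x = 1 /\ z = inner (A x) x.

Definition boundary (S : C -> Prop) (z : C) : Prop :=
  forall eps, 0 < eps ->
    (exists w, S w /\ Cmod (Csub w z) < eps) /\
    (exists w, ~ S w /\ Cmod (Csub w z) < eps).

Definition maxnumrange {H : HilbertSpace} (A : H -> H) (nA : R) (lam : C) : Prop :=
  exists x : nat -> H,
    (forall n, vnorm (x n) = 1) /\
    Un_cv (fun n => vnorm (A (x n))) nA /\
    Un_cv (fun n => Cmod (Csub (inner (A (x n)) (x n)) lam)) 0.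

Definition spectrum {H : HilbertSpace} (A : H -> H) (lam : C) : Prop :=
  ~ exists B : H -> H, bounded_linear B /\
      (forall x, B (vadd (A x) (vopp (vscal lam x))) = x) /\
      (forall x, vadd (A (B x)) (vopp (vscal lam (B x))) = x).

Definition normaloid {H : HilbertSpace} (A : H -> H) (nA : R) : Prop :=
  exists lam, spectrum A lam /\ Cmod lam = nA.

(* If lam is in the spectrum and |lam| = ||A||, then A - lam is not bounded below: otherwise,
   since A - mu is invertible for mu just outside the disc of radius ||A||, a contraction
   argument would make A - lam invertible.  So lam is an approximate eigenvalue; approximate
   eigenvectors x_n give lam in W_0(A), and lam is on the boundary of W(A) because W(A) lies in
   the closed disc of radius ||A||.

   Conversely, if the numerical radius is ||A||, a cluster point mu of values <A x_n, x_n> with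
   modulus tending to ||A|| satisfies ||A x_n - mu x_n||^2 <= 2 ||A|| |<A x_n, x_n> - mu| -> 0,
   so mu is in the spectrum.  If the numerical radius is w < ||A||, no lam in W_0(A) is on the
   boundary of W(A): pick a unit e with ||A e|| close to ||A|| and <A e, e> = p close to lam,
   write A e = p e + s z with z a unit vector orthogonal to e, and look at the values of the
   form on e + t z.  As e almost attains the norm, <A e, A z> is small.  Either the real-linear
   map t |-> s conj t + <A z, e> t is well invertible, and a fixed-point argument shows that
   W(A) contains a whole disc around p, or it is nearly degenerate, and a suitable e + t z has
   a numerical value of modulus about ||A e|| > w. *)

From Stdlib Require Import Reals Lra Lia Psatz Classical ClassicalEpsilon Nsatz.
Open Scope R_scope.

Arguments vadd_assoc {h}. Arguments vadd_comm {h}. Arguments vadd_zero {h}.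
Arguments vadd_opp {h}. Arguments vscal_one {h}. Arguments vscal_assoc {h}.
Arguments vscal_distr_v {h}. Arguments vscal_distr_s {h}. Arguments inner_add_l {h}.
Arguments inner_scal_l {h}. Arguments inner_conj_sym {h}. Arguments inner_pos {h}.

Lemma C_ext (z w : C) : Re z = Re w -> Im z = Im w -> z = w.
Proof. destruct z, w; simpl; intros -> ->; reflexivity. Qed.

Ltac Cring := apply C_ext; simpl; ring.

Lemma sqrt_le_of_sqr (x y : R) : 0 <= y -> x <= y * y -> sqrt x <= y.
Proof.
  intros Hy Hx. destruct (Rle_dec x 0).
  - rewrite sqrt_neg_0 by lra. lra.
  - rewrite <- (sqrt_square y) by lra. apply sqrt_le_1; nra.
Qed.

Lemma sqr_le_sqrt (x y : R) : 0 <= y -> y * y <= x -> y <= sqrt x.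
Proof. intros Hy Hx. rewrite <- (sqrt_square y) by lra. apply sqrt_le_1; nra. Qed.

Lemma Rabs_sqr (x : R) : Rabs x * Rabs x = x * x.
Proof. rewrite <- Rabs_mult. apply Rabs_pos_eq. nra. Qed.

Lemma Rle_of_sqr_le (x y : R) : 0 <= y -> x * x <= y * y -> x <= y.
Proof. intros Hy Hxy. destruct (Rle_dec x y); [auto | nra]. Qed.

Lemma Cmod_ge0 (z : C) : 0 <= Cmod z.
Proof. apply sqrt_pos. Qed.

Lemma Cmod_sqr (z : C) : Cmod z * Cmod z = Re z * Re z + Im z * Im z.
Proof. apply sqrt_sqrt. nra. Qed.

Lemma Cmod_le_of_sqr (z : C) (b : R) :
  0 <= b -> Re z * Re z + Im z * Im z <= b * b -> Cmod z <= b.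
Proof. apply sqrt_le_of_sqr. Qed.

Lemma Cmod_ge_of_sqr (z : C) (b : R) :
  0 <= b -> b * b <= Re z * Re z + Im z * Im z -> b <= Cmod z.
Proof. apply sqr_le_sqrt. Qed.

Lemma Cmod_le_Rabs_add (z : C) : Cmod z <= Rabs (Re z) + Rabs (Im z).
Proof.
  pose proof (Rabs_pos (Re z)); pose proof (Rabs_pos (Im z)).
  apply Cmod_le_of_sqr; [lra|]. rewrite <- (Rabs_sqr (Re z)), <- (Rabs_sqr (Im z)). nra.
Qed.

Lemma Cmod_mul (z w : C) : Cmod (Cmul z w) = Cmod z * Cmod w.
Proof.
  pose proof (Cmod_ge0 z); pose proof (Cmod_ge0 w).
  assert (E : Cmod (Cmul z w) * Cmod (Cmul z w) = (Cmod z * Cmod w) * (Cmod z * Cmod w)).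
  { rewrite Cmod_sqr.
    replace (Cmod z * Cmod w * (Cmod z * Cmod w)) with ((Cmod z * Cmod z) * (Cmod w * Cmod w))
      by ring.
    rewrite !Cmod_sqr. simpl. ring. }
  apply Rsqr_inj; [apply Cmod_ge0 | nra | exact E].
Qed.

Lemma Cmod_add_le (z w : C) : Cmod (Cadd z w) <= Cmod z + Cmod w.
Proof.
  pose proof (Cmod_ge0 z); pose proof (Cmod_ge0 w).
  pose proof (Cmod_sqr z); pose proof (Cmod_sqr w).
  assert (Re z * Re w + Im z * Im w <= Cmod z * Cmod w).
  { assert ((Re z * Re w + Im z * Im w) * (Re z * Re w + Im z * Im w)
            <= (Cmod z * Cmod w) * (Cmod z * Cmod w)).
    { replace (Cmod z * Cmod w * (Cmod z * Cmod w)) with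
        ((Cmod z * Cmod z) * (Cmod w * Cmod w)) by ring.
      rewrite !Cmod_sqr. pose proof (pow2_ge_0 (Re z * Im w - Im z * Re w)). nra. }
    apply Rle_of_sqr_le; nra. }
  apply Cmod_le_of_sqr; simpl; nra.
Qed.

Lemma Rabs_Re_le_Cmod (z : C) : Rabs (Re z) <= Cmod z.
Proof.
  apply Rle_of_sqr_le; [apply Cmod_ge0 | rewrite Cmod_sqr, Rabs_sqr; nra].
Qed.

Lemma Rabs_Im_le_Cmod (z : C) : Rabs (Im z) <= Cmod z.
Proof.
  apply Rle_of_sqr_le; [apply Cmod_ge0 | rewrite Cmod_sqr, Rabs_sqr; nra].
Qed.

Lemma Re_le_Cmod (z : C) : Re z <= Cmod z.
Proof. pose proof (Rabs_Re_le_Cmod z); pose proof (Rle_abs (Re z)). lra. Qed.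

Lemma Cmod_conj (z : C) : Cmod (Cconj z) = Cmod z.
Proof. unfold Cmod; simpl; f_equal; ring. Qed.

Lemma Cmod_opp (z : C) : Cmod (Copp z) = Cmod z.
Proof. unfold Cmod; simpl; f_equal; ring. Qed.

Lemma Cmod_RtoC (r : R) : Cmod (RtoC r) = Rabs r.
Proof.
  unfold Cmod; simpl. replace (r * r + 0 * 0) with (Rabs r * Rabs r) by (rewrite Rabs_sqr; ring).
  apply sqrt_square, Rabs_pos.
Qed.

Lemma Cmod_eq0 (z : C) : Cmod z = 0 -> z = C0.
Proof. intros Hz. pose proof (Cmod_sqr z) as E. rewrite Hz in E. apply C_ext; simpl; nra. Qed.

Lemma Cmod_C0 : Cmod C0 = 0.
Proof. change C0 with (RtoC 0). rewrite Cmod_RtoC. apply Rabs_R0. Qed.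

Lemma Cmod_C1 : Cmod C1 = 1.
Proof. change C1 with (RtoC 1). rewrite Cmod_RtoC. apply Rabs_R1. Qed.

Lemma Cmod_sub_sym (z w : C) : Cmod (Csub z w) = Cmod (Csub w z).
Proof. unfold Cmod; simpl; f_equal; ring. Qed.

Lemma Cmod_sub_triangle (z v w : C) : Cmod (Csub z w) <= Cmod (Csub z v) + Cmod (Csub v w).
Proof.
  replace (Csub z w) with (Cadd (Csub z v) (Csub v w)) by Cring. apply Cmod_add_le.
Qed.

Lemma Cmod_sub_le (z w : C) : Cmod (Csub z w) <= Cmod z + Cmod w.
Proof. unfold Csub. rewrite <- (Cmod_opp w). apply Cmod_add_le. Qed.

Lemma Cmod_sub_ge (z w : C) : Cmod z - Cmod w <= Cmod (Csub z w).
Proof.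
  pose proof (Cmod_add_le (Csub z w) w) as E.
  replace (Cadd (Csub z w) w) with z in E by Cring. lra.
Qed.

Lemma Rabs_Cmod_sub_le (z w : C) : Rabs (Cmod z - Cmod w) <= Cmod (Csub z w).
Proof.
  pose proof (Cmod_sub_ge z w). pose proof (Cmod_sub_ge w z) as E.
  rewrite Cmod_sub_sym in E. apply Rabs_le. lra.
Qed.

Lemma Cmod_scal_pos (r : R) (z : C) : 0 <= r -> Cmod (Cmul (RtoC r) z) = r * Cmod z.
Proof. intros. rewrite Cmod_mul, Cmod_RtoC, Rabs_pos_eq; auto. Qed.

Definition Cinv (z : C) : C :=
  mkC (Re z / (Re z * Re z + Im z * Im z)) (- Im z / (Re z * Re z + Im z * Im z)).

Lemma Cinv_l (z : C) : 0 < Cmod z -> Cmul (Cinv z) z = C1.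
Proof.
  intros Hz. assert (0 < Re z * Re z + Im z * Im z) by (rewrite <- Cmod_sqr; nra).
  apply C_ext; simpl; field; lra.
Qed.

Lemma Cmod_Cinv (z : C) : 0 < Cmod z -> Cmod (Cinv z) = / Cmod z.
Proof.
  intros Hz. assert (E : Cmod (Cmul (Cinv z) z) = 1) by (rewrite Cinv_l by auto; apply Cmod_C1).
  rewrite Cmod_mul in E. field_simplify_eq; lra.
Qed.

(* The square root (1 + w) / |1 + w| of a unit w, with i for w = -1. *)
Lemma unit_sqrt_exists (w : C) : Cmod w = 1 -> exists z, Cmod z = 1 /\ Cmul z z = w.
Proof.
  intros hw. pose proof (Cmod_sqr w) as hw2. rewrite hw in hw2.
  destruct (Req_dec (Cmod (Cadd C1 w)) 0) as [E|E].
  - apply Cmod_eq0 in E. assert (ER := f_equal Re E). assert (EI := f_equal Im E).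
    simpl in ER, EI. exists (mkC 0 1). split.
    + unfold Cmod; simpl. replace (0 * 0 + 1 * 1) with 1 by ring. apply sqrt_1.
    + apply C_ext; simpl; nra.
  - set (n := Cmod (Cadd C1 w)) in *. pose proof (Cmod_ge0 (Cadd C1 w)) as hn0.
    pose proof (Cmod_sqr (Cadd C1 w)) as hn. fold n in hn0, hn. simpl in hn.
    exists (Cmul (RtoC (/ n)) (Cadd C1 w)). split.
    + rewrite Cmod_scal_pos by (left; apply Rinv_0_lt_compat; lra). fold n. field. auto.
    + set (k := / n). assert (hk : k * n = 1) by (unfold k; field; auto).
      clearbody k n.
      assert (hk2 : k * k * (2 + 2 * Re w) = 1).
      { replace (2 + 2 * Re w) with (n * n) by nra.
        replace (k * k * (n * n)) with ((k * n) * (k * n)) by ring. rewrite hk. ring. }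
      apply C_ext; simpl.
      * transitivity (Re w * (k * k * (2 + 2 * Re w))); [nra | rewrite hk2; ring].
      * transitivity (Im w * (k * k * (2 + 2 * Re w))); [ring | rewrite hk2; ring].
Qed.

Section HilbertAlgebra.
Context {H : HilbertSpace}.
Implicit Types x y z : H.

Definition vsub x y : H := vadd x (vopp y).
Definition sqnorm x : R := Re (inner x x).

Lemma vadd_cancel_l x y z : vadd x y = vadd x z -> y = z.
Proof.
  intros E. apply (f_equal (vadd (vopp x))) in E.
  rewrite !vadd_assoc, (vadd_comm (vopp x) x), vadd_opp,
    (vadd_comm vzero y), (vadd_comm vzero z), !vadd_zero in E.
  exact E.
Qed.

Lemma vzero_add x : vadd vzero x = x.
Proof. rewrite vadd_comm; apply vadd_zero. Qed.

Lemma vscal_C0 x : vscal C0 x = vzero.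
Proof.
  apply (vadd_cancel_l (vscal C0 x)). rewrite vadd_zero, <- vscal_distr_s.
  f_equal. Cring.
Qed.

Lemma vopp_scal x : vopp x = vscal (Copp C1) x.
Proof.
  apply (vadd_cancel_l x). rewrite vadd_opp.
  rewrite <- (vscal_one x) at 1. rewrite <- vscal_distr_s.
  replace (Cadd C1 (Copp C1)) with C0 by Cring. symmetry; apply vscal_C0.
Qed.

Lemma vscal_vzero c : vscal c (@vzero H) = vzero.
Proof.
  rewrite <- (vscal_C0 vzero) at 1. rewrite vscal_assoc.
  replace (Cmul c C0) with C0 by Cring. apply vscal_C0.
Qed.

Lemma vsub_diag x : vsub x x = vzero.
Proof. apply vadd_opp. Qed.

Lemma vsub_vzero x : vsub x vzero = x.
Proof. unfold vsub. rewrite vopp_scal, vscal_vzero. apply vadd_zero. Qed.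

Lemma vsub_add x y : vadd (vsub x y) y = x.
Proof. unfold vsub. rewrite <- vadd_assoc, (vadd_comm (vopp y)), vadd_opp, vadd_zero. auto. Qed.

Lemma vsub_eq x y : vsub x y = vzero -> x = y.
Proof. intros E. rewrite <- (vsub_add x y), E. apply vzero_add. Qed.

Lemma vscal_sub_r c x y : vscal c (vsub x y) = vsub (vscal c x) (vscal c y).
Proof.
  unfold vsub. rewrite vscal_distr_v, !vopp_scal, !vscal_assoc. do 2 f_equal. Cring.
Qed.

Lemma vscal_sub_l c d x : vsub (vscal c x) (vscal d x) = vscal (Csub c d) x.
Proof.
  unfold vsub, Csub. rewrite vscal_distr_s, vopp_scal, vscal_assoc. do 2 f_equal. Cring.
Qed.

Lemma vadd_swap x y z (t : H) : vadd (vadd x y) (vadd z t) = vadd (vadd x z) (vadd y t).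
Proof. rewrite !vadd_assoc. f_equal. rewrite <- !vadd_assoc. f_equal. apply vadd_comm. Qed.

Lemma vopp_vsub x y : vopp (vsub x y) = vsub y x.
Proof.
  apply (vadd_cancel_l (vsub x y)). rewrite vadd_opp. unfold vsub.
  rewrite (vadd_comm y), vadd_swap, vadd_opp, (vadd_comm (vopp y)), vadd_opp.
  symmetry; apply vadd_zero.
Qed.

Lemma vsub_vadd_vadd x y z (t : H) : vsub (vadd x y) (vadd z t) = vadd (vsub x z) (vsub y t).
Proof. unfold vsub. rewrite !vopp_scal, vscal_distr_v. apply vadd_swap. Qed.

Lemma vsub_vsub_vsub x y z (t : H) : vsub (vsub x y) (vsub z t) = vsub (vsub x z) (vsub y t).
Proof.
  unfold vsub at 1 4. rewrite !vopp_vsub. unfold vsub.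
  rewrite vadd_swap. symmetry. rewrite vadd_swap. f_equal. apply vadd_comm.
Qed.

Lemma vsub_sub_r x y : vsub x (vsub x y) = y.
Proof. unfold vsub at 1. rewrite vopp_vsub, vadd_comm. apply vsub_add. Qed.

Lemma inner_zero_l y : inner vzero y = C0.
Proof. rewrite <- (vscal_C0 y), inner_scal_l. Cring. Qed.

Lemma inner_zero_r y : inner y vzero = C0.
Proof. rewrite inner_conj_sym, inner_zero_l. Cring. Qed.

Lemma inner_add_r x y z : inner x (vadd y z) = Cadd (inner x y) (inner x z).
Proof.
  rewrite inner_conj_sym, inner_add_l, (inner_conj_sym y x), (inner_conj_sym z x). Cring.
Qed.

Lemma inner_scal_r a x y : inner x (vscal a y) = Cmul (Cconj a) (inner x y).
Proof. rewrite inner_conj_sym, inner_scal_l, (inner_conj_sym y x). Cring. Qed.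

Lemma inner_sub_l x y z : inner (vsub x y) z = Csub (inner x z) (inner y z).
Proof. unfold vsub. rewrite inner_add_l, vopp_scal, inner_scal_l. Cring. Qed.

Lemma inner_self_real x : inner x x = RtoC (sqnorm x).
Proof.
  pose proof (f_equal Im (inner_conj_sym x x)) as E. simpl in E.
  apply C_ext; simpl; [reflexivity | lra].
Qed.

Lemma sqnorm_ge0 x : 0 <= sqnorm x.
Proof.
  unfold sqnorm. destruct (classic (x = vzero)) as [->|Nx].
  - rewrite inner_zero_l. simpl; lra.
  - left; apply inner_pos, Nx.
Qed.

Lemma sqnorm_eq0 x : sqnorm x = 0 -> x = vzero.
Proof.
  intros E. apply NNPP. intros Nx. pose proof (inner_pos x Nx). unfold sqnorm in E. lra.
Qed.

Lemma vnorm_sqr x : vnorm x * vnorm x = sqnorm x.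
Proof. apply sqrt_sqrt, sqnorm_ge0. Qed.

Lemma vnorm_ge0 x : 0 <= vnorm x.
Proof. apply sqrt_pos. Qed.

Lemma vnorm_eq0 x : vnorm x = 0 -> x = vzero.
Proof. intros E. apply sqnorm_eq0. rewrite <- vnorm_sqr, E. ring. Qed.

Lemma vnorm_pos x : x <> vzero -> 0 < vnorm x.
Proof. intros Nx. destruct (vnorm_ge0 x) as [|E]; auto. symmetry in E. now apply vnorm_eq0 in E. Qed.

Lemma vnorm_vzero : vnorm (@vzero H) = 0.
Proof. unfold vnorm. rewrite inner_zero_l. apply sqrt_0. Qed.

Lemma vnorm_le_of_sqnorm x b : 0 <= b -> sqnorm x <= b * b -> vnorm x <= b.
Proof. apply sqrt_le_of_sqr. Qed.

Lemma vnorm_1_of_sqnorm x : sqnorm x = 1 -> vnorm x = 1.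
Proof. intros E. unfold vnorm. fold (sqnorm x). rewrite E. apply sqrt_1. Qed.

Lemma sqnorm_1_of_vnorm x : vnorm x = 1 -> sqnorm x = 1.
Proof. intros E. rewrite <- vnorm_sqr, E. ring. Qed.

Lemma sqnorm_add x y : sqnorm (vadd x y) = sqnorm x + 2 * Re (inner x y) + sqnorm y.
Proof.
  unfold sqnorm. rewrite inner_add_l, !inner_add_r, (inner_conj_sym x y). simpl. ring.
Qed.

Lemma sqnorm_scal c x : sqnorm (vscal c x) = Cmod c * Cmod c * sqnorm x.
Proof.
  unfold sqnorm. rewrite inner_scal_l, inner_scal_r, Cmod_sqr, inner_self_real. simpl. ring.
Qed.

Lemma vnorm_scal c x : vnorm (vscal c x) = Cmod c * vnorm x.
Proof.
  unfold vnorm. fold (sqnorm (vscal c x)). rewrite sqnorm_scal, sqrt_mult, sqrt_square.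
  - reflexivity.
  - apply Cmod_ge0.
  - pose proof (Cmod_ge0 c); nra.
  - apply sqnorm_ge0.
Qed.

Lemma vnorm_opp x : vnorm (vopp x) = vnorm x.
Proof. rewrite vopp_scal, vnorm_scal, Cmod_opp, Cmod_C1. ring. Qed.

Lemma vnorm_sub_sym x y : vnorm (vsub x y) = vnorm (vsub y x).
Proof. rewrite <- vopp_vsub. apply vnorm_opp. Qed.

(* Expand |x + k y|^2 >= 0 with k = - <x, y> / |y|^2. *)
Lemma cauchy_schwarz x y : Cmod (inner x y) <= vnorm x * vnorm y.
Proof.
  destruct (Req_dec (sqnorm y) 0) as [E|E].
  - apply sqnorm_eq0 in E. subst y. rewrite inner_zero_r, Cmod_C0, vnorm_vzero. lra.
  - pose proof (sqnorm_ge0 y). assert (Y : 0 < sqnorm y) by lra.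
    set (c := inner x y).
    set (k := mkC (- Re c / sqnorm y) (- Im c / sqnorm y)).
    pose proof (sqnorm_ge0 (vadd x (vscal k y))) as Hk.
    rewrite sqnorm_add, sqnorm_scal, inner_scal_r, Cmod_sqr in Hk. fold c in Hk. simpl in Hk.
    apply Cmod_le_of_sqr; [apply Rmult_le_pos; apply vnorm_ge0|].
    replace (vnorm x * vnorm y * (vnorm x * vnorm y)) with (sqnorm x * sqnorm y)
      by (rewrite <- !vnorm_sqr; ring).
    replace (sqnorm x + 2 * (- Re c / sqnorm y * Re c - - (- Im c / sqnorm y) * Im c) +
      (- Re c / sqnorm y * (- Re c / sqnorm y) + - Im c / sqnorm y * (- Im c / sqnorm y))
        * sqnorm y)
      with ((sqnorm x * sqnorm y - (Re c * Re c + Im c * Im c)) / sqnorm y) in Hk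
      by (field; lra).
    apply Rmult_le_compat_r with (r := sqnorm y) in Hk; [|lra].
    unfold Rdiv in Hk. rewrite Rmult_0_l, Rmult_assoc, Rinv_l, Rmult_1_r in Hk by lra. lra.
Qed.

Lemma vnorm_add_le x y : vnorm (vadd x y) <= vnorm x + vnorm y.
Proof.
  pose proof (vnorm_ge0 x); pose proof (vnorm_ge0 y).
  apply vnorm_le_of_sqnorm; [lra|].
  rewrite sqnorm_add, <- !vnorm_sqr.
  pose proof (cauchy_schwarz x y). pose proof (Re_le_Cmod (inner x y)). nra.
Qed.

Lemma vnorm_sub_triangle x y z : vnorm (vsub x z) <= vnorm (vsub x y) + vnorm (vsub y z).
Proof.
  replace (vsub x z) with (vadd (vsub x y) (vsub y z)); [apply vnorm_add_le|].
  unfold vsub.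
  rewrite <- vadd_assoc, (vadd_assoc (vopp y)), (vadd_comm (vopp y) y), vadd_opp, vzero_add.
  reflexivity.
Qed.

Lemma vnorm_sub_ge x y : vnorm x - vnorm y <= vnorm (vsub x y).
Proof. pose proof (vnorm_add_le (vsub x y) y) as E. rewrite vsub_add in E. lra. Qed.

Lemma normalize_unit x : x <> vzero -> vnorm (vscal (RtoC (/ vnorm x)) x) = 1.
Proof.
  intros Nx. pose proof (vnorm_pos x Nx).
  rewrite vnorm_scal, Cmod_RtoC, Rabs_pos_eq; [field; lra|].
  left; apply Rinv_0_lt_compat; auto.
Qed.

End HilbertAlgebra.

(** * The contraction principle *)

Definition vconverges {H : HilbertSpace} (u : nat -> H) (l : H) : Prop :=
  forall eps, 0 < eps -> exists N, forall n, (n >= N)%nat -> vnorm (vsub (u n) l) < eps.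

Definition seq_closed {H : HilbertSpace} (P : H -> Prop) : Prop :=
  forall u l, (forall n, P (u n)) -> vconverges u l -> P l.

Lemma geometric_tail_small (d k : R) : 0 <= d -> 0 <= k < 1 ->
  forall eps, 0 < eps -> exists N, forall n, (n >= N)%nat -> d * k ^ n / (1 - k) < eps.
Proof.
  intros Hd Hk eps Heps.
  destruct (pow_lt_1_zero k) with (y := eps * (1 - k) / (d + 1)) as [N HN].
  - rewrite Rabs_pos_eq; lra.
  - apply Rdiv_lt_0_compat; nra.
  - exists N. intros n Hn. specialize (HN n Hn).
    rewrite Rabs_pos_eq in HN by (apply pow_le; lra).
    apply Rmult_lt_compat_r with (r := d + 1) in HN; [|lra].
    unfold Rdiv in *. rewrite Rmult_assoc, Rinv_l, Rmult_1_r in HN by lra.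
    apply Rmult_lt_reg_r with (r := 1 - k); [lra|].
    rewrite Rmult_assoc, Rinv_l, Rmult_1_r by lra.
    pose proof (pow_le k n (proj1 Hk)). nra.
Qed.

Section Contraction.
Context {H : HilbertSpace} (P : H -> Prop) (F : H -> H) (k : R) (x0 : H).
Hypotheses (Hk : 0 <= k < 1) (HP0 : P x0) (HPF : forall x, P x -> P (F x))
  (HF : forall x y, P x -> P y -> vnorm (vsub (F x) (F y)) <= k * vnorm (vsub x y)).

Let u n := Nat.iter n F x0.
Let d0 := vnorm (vsub (u 1%nat) (u 0%nat)).

Lemma iterate_in : forall n, P (u n).
Proof. induction n; simpl; auto. Qed.

Lemma iterate_step : forall n, vnorm (vsub (u (S n)) (u n)) <= d0 * k ^ n.
Proof.
  induction n as [|n IH]; [change (k ^ 0) with 1; rewrite Rmult_1_r; apply Rle_refl|].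
  change (vnorm (vsub (F (u (S n))) (F (u n))) <= d0 * (k * k ^ n)).
  eapply Rle_trans; [apply HF; apply iterate_in|]. nra.
Qed.

Lemma iterate_tail n m : (n <= m)%nat -> vnorm (vsub (u m) (u n)) <= d0 * k ^ n / (1 - k).
Proof.
  intros Hnm. replace m with (n + (m - n))%nat by lia. generalize (m - n)%nat as j.
  assert (Hd0 : 0 <= d0) by apply vnorm_ge0.
  assert (Hkn : 0 <= k ^ n) by (apply pow_le; lra).
  enough (Hj : forall j,
            vnorm (vsub (u (n + j)%nat) (u n)) <= d0 * k ^ n * (1 - k ^ j) / (1 - k)).
  { intros j. eapply Rle_trans; [apply Hj|]. unfold Rdiv.
    apply Rmult_le_compat_r; [left; apply Rinv_0_lt_compat; lra|].
    assert (0 <= d0 * k ^ n * k ^ j) by (pose proof (pow_le k j (proj1 Hk)); apply Rmult_le_pos; nra).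
    lra. }
  induction j as [|j IH].
  - rewrite Nat.add_0_r, vsub_diag, vnorm_vzero. simpl. unfold Rdiv. nra.
  - eapply Rle_trans; [apply (vnorm_sub_triangle _ (u (n + j)%nat))|].
    replace (n + S j)%nat with (S (n + j)) by lia.
    eapply Rle_trans; [apply Rplus_le_compat; [apply iterate_step | apply IH]|].
    rewrite pow_add. simpl. apply Req_le. field. lra.
Qed.

Lemma contraction_fixed_point : seq_closed P -> exists l, P l /\ F l = l.
Proof.
  intros Hcl.
  assert (Hsmall := geometric_tail_small d0 k (vnorm_ge0 _) Hk).
  destruct (complete H u) as [l Hl].
  { intros e He. destruct (Hsmall e He) as [N HN]. exists N. intros n m Hn Hm.
    change (vnorm (vsub (u n) (u m)) < e).
    destruct (Nat.le_ge_cases n m).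
    - rewrite vnorm_sub_sym. eapply Rle_lt_trans; [apply iterate_tail; lia | apply HN; lia].
    - eapply Rle_lt_trans; [apply iterate_tail; lia | apply HN; lia]. }
  change (vconverges u l) in Hl.
  assert (HPl : P l) by (apply (Hcl u); auto using iterate_in).
  exists l. split; auto.
  apply vsub_eq, vnorm_eq0. apply Rle_antisym; [|apply vnorm_ge0].
  apply Rnot_lt_le. intros Hpos.
  destruct (Hl (vnorm (vsub (F l) l) / 2)) as [N HN]; [lra|].
  pose proof (HN N (le_n _)) as HN1. pose proof (HN (S N) (le_S _ _ (le_n _))) as HN2.
  change (u (S N)) with (F (u N)) in HN2.
  pose proof (vnorm_sub_triangle (F l) (F (u N)) l).
  pose proof (HF l (u N) HPl (iterate_in N)) as HFl.
  rewrite (vnorm_sub_sym l) in HFl. pose proof (vnorm_ge0 (vsub (u N) l)). nra.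
Qed.

End Contraction.

Definition Cinner (z w : C) : C := Cmul z (Cconj w).

Lemma Cinner_pos (z : C) : z <> C0 -> 0 < Re (Cinner z z).
Proof.
  intros Hz. unfold Cinner; simpl.
  destruct (Req_dec (Re z) 0); destruct (Req_dec (Im z) 0); [|nra..].
  exfalso; apply Hz; apply C_ext; simpl; auto.
Qed.

Lemma sqrt_Cinner (z : C) : sqrt (Re (Cinner z z)) = Cmod z.
Proof. unfold Cmod, Cinner. simpl. f_equal. ring. Qed.

Lemma C_cauchy_converges (u : nat -> C) :
  (forall eps, 0 < eps -> exists N, forall n m, (n >= N)%nat -> (m >= N)%nat ->
      Cmod (Csub (u n) (u m)) < eps) ->
  exists l, forall eps, 0 < eps -> exists N, forall n, (n >= N)%nat -> Cmod (Csub (u n) l) < eps.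
Proof.
  intros Hc.
  assert (Hre : Cauchy_crit (fun n => Re (u n))).
  { intros e He. destruct (Hc e He) as [N HN]. exists N. intros n m Hn Hm.
    pose proof (Rabs_Re_le_Cmod (Csub (u n) (u m))). specialize (HN n m Hn Hm).
    unfold Rdist. simpl in *. unfold Rminus. lra. }
  assert (Him : Cauchy_crit (fun n => Im (u n))).
  { intros e He. destruct (Hc e He) as [N HN]. exists N. intros n m Hn Hm.
    pose proof (Rabs_Im_le_Cmod (Csub (u n) (u m))). specialize (HN n m Hn Hm).
    unfold Rdist. simpl in *. unfold Rminus. lra. }
  destruct (R_complete _ Hre) as [lr Hlr]. destruct (R_complete _ Him) as [li Hli].
  exists (mkC lr li). intros e He.
  destruct (Hlr (e / 2)) as [N1 HN1]; [lra|]. destruct (Hli (e / 2)) as [N2 HN2]; [lra|].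
  exists (max N1 N2). intros n Hn.
  specialize (HN1 n ltac:(lia)). specialize (HN2 n ltac:(lia)). unfold Rdist in HN1, HN2.
  eapply Rle_lt_trans; [apply Cmod_le_Rabs_add|]. simpl. unfold Rminus in *. lra.
Qed.

Definition C_hilbert : HilbertSpace.
Proof.
  refine {| carrier := C; vadd := Cadd; vzero := C0; vopp := Copp; vscal := Cmul;
            inner := Cinner |};
    intros; try (apply Cinner_pos; auto; fail); try (unfold Cinner; Cring).
  rename H into Hc. destruct (C_cauchy_converges u) as [l Hl].
  - intros e He. destruct (Hc e He) as [N HN]. exists N. intros n m Hn Hm.
    rewrite <- sqrt_Cinner. apply HN; auto.
  - exists l. intros e He. destruct (Hl e He) as [N HN]. exists N. intros n Hn.
    rewrite sqrt_Cinner. apply HN; auto.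
Defined.

Lemma C_hilbert_vnorm (z : C_hilbert) : vnorm z = Cmod z.
Proof. apply sqrt_Cinner. Qed.

Lemma C_contraction_fixed_point (P : C -> Prop) (F : C -> C) (k : R) (x0 : C) :
  0 <= k < 1 -> P x0 -> (forall x, P x -> P (F x)) ->
  (forall x y, P x -> P y -> Cmod (Csub (F x) (F y)) <= k * Cmod (Csub x y)) ->
  (forall u l, (forall n, P (u n)) ->
     (forall eps, 0 < eps -> exists N, forall n, (n >= N)%nat -> Cmod (Csub (u n) l) < eps) ->
     P l) ->
  exists l, P l /\ F l = l.
Proof.
  intros Hk HP0 HPF HF Hcl. apply (@contraction_fixed_point C_hilbert P F k x0); auto.
  - intros x y Hx Hy. rewrite !C_hilbert_vnorm. apply HF; auto.
  - intros u l Hu Hl. apply (Hcl u l Hu). intros e He. destruct (Hl e He) as [N HN].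
    exists N. intros n Hn. rewrite <- C_hilbert_vnorm. apply HN; auto.
Qed.

(** * Bounded operators and approximate eigenvalues *)

Definition shift {H : HilbertSpace} (A : H -> H) (mu : C) (x : H) : H := vsub (A x) (vscal mu x).

Definition bounded_below {H : HilbertSpace} (T : H -> H) (c : R) : Prop :=
  forall x, c * vnorm x <= vnorm (T x).

Definition approx_eigenvalue {H : HilbertSpace} (A : H -> H) (mu : C) : Prop :=
  forall eps, 0 < eps -> exists x, vnorm x = 1 /\ vnorm (shift A mu x) < eps.

Section Operators.
Context {H : HilbertSpace} {A : H -> H} (hA : bounded_linear A).

Lemma lin_add x y : A (vadd x y) = vadd (A x) (A y).
Proof. apply hA. Qed.

Lemma lin_scal c x : A (vscal c x) = vscal c (A x).
Proof. apply hA. Qed.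

Lemma lin_sub x y : A (vsub x y) = vsub (A x) (A y).
Proof. unfold vsub. rewrite lin_add, !vopp_scal, lin_scal. reflexivity. Qed.

Lemma lin_vzero : A vzero = vzero.
Proof. rewrite <- (vscal_C0 vzero) at 1. rewrite lin_scal. apply vscal_C0. Qed.

Lemma shift_add mu x y : shift A mu (vadd x y) = vadd (shift A mu x) (shift A mu y).
Proof. unfold shift. rewrite lin_add, vscal_distr_v. apply vsub_vadd_vadd. Qed.

Lemma shift_sub mu x y : shift A mu (vsub x y) = vsub (shift A mu x) (shift A mu y).
Proof. unfold shift. rewrite lin_sub, vscal_sub_r. apply vsub_vsub_vsub. Qed.

Lemma shift_scal mu c x : shift A mu (vscal c x) = vscal c (shift A mu x).
Proof.
  unfold shift. rewrite lin_scal, vscal_sub_r, !vscal_assoc. do 2 f_equal. Cring.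
Qed.

Lemma shift_vzero mu : shift A mu vzero = vzero.
Proof. unfold shift. rewrite lin_vzero, vscal_vzero. apply vsub_diag. Qed.

Lemma bounded_below_of_unit mu c : 0 <= c ->
  (forall x, vnorm x = 1 -> c <= vnorm (shift A mu x)) -> bounded_below (shift A mu) c.
Proof.
  intros hc hu x. destruct (classic (x = vzero)) as [->|Nx].
  - rewrite vnorm_vzero, shift_vzero, vnorm_vzero. lra.
  - pose proof (vnorm_pos x Nx). specialize (hu _ (normalize_unit x Nx)).
    rewrite shift_scal, vnorm_scal, Cmod_RtoC, Rabs_pos_eq in hu
      by (left; apply Rinv_0_lt_compat; auto).
    apply Rmult_le_compat_r with (r := vnorm x) in hu; [|lra].
    replace (/ vnorm x * vnorm (shift A mu x) * vnorm x) with (vnorm (shift A mu x)) in hu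
      by (field; lra).
    exact hu.
Qed.

Lemma bounded_below_inj mu c : 0 < c -> bounded_below (shift A mu) c ->
  forall x y, shift A mu x = shift A mu y -> x = y.
Proof.
  intros hc hb x y E. apply vsub_eq, vnorm_eq0.
  specialize (hb (vsub x y)). rewrite shift_sub, E, vsub_diag, vnorm_vzero in hb.
  pose proof (vnorm_ge0 (vsub x y)). nra.
Qed.

Section OperatorNorm.
Context {a : R} (hN : is_opnorm A a).

Lemma opnorm_unit x : vnorm x = 1 -> vnorm (A x) <= a.
Proof. intros Hx. apply (proj1 hN). exists x. auto. Qed.

Lemma opnorm_bound x : vnorm (A x) <= a * vnorm x.
Proof.
  destruct (classic (x = vzero)) as [->|Nx].
  - rewrite lin_vzero, vnorm_vzero. lra.
  - pose proof (vnorm_pos x Nx).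
    pose proof (opnorm_unit _ (normalize_unit x Nx)) as Hu.
    rewrite lin_scal, vnorm_scal, Cmod_RtoC, Rabs_pos_eq in Hu
      by (left; apply Rinv_0_lt_compat; auto).
    apply Rmult_le_compat_r with (r := vnorm x) in Hu; [|lra].
    replace (/ vnorm x * vnorm (A x) * vnorm x) with (vnorm (A x)) in Hu by (field; lra).
    exact Hu.
Qed.

Lemma opnorm_sqnorm_bound x : 0 <= a -> sqnorm (A x) <= a * a * sqnorm x.
Proof.
  intros ha. pose proof (opnorm_bound x). rewrite <- !vnorm_sqr.
  pose proof (vnorm_ge0 (A x)). pose proof (vnorm_ge0 x). nra.
Qed.

Lemma opnorm_ge0 : (exists x : H, x <> vzero) -> 0 <= a.
Proof.
  intros [x Nx]. pose proof (opnorm_unit _ (normalize_unit x Nx)).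
  pose proof (vnorm_ge0 (A (vscal (RtoC (/ vnorm x)) x))). lra.
Qed.

Lemma Cmod_numrange_le z : numrange A z -> Cmod z <= a.
Proof.
  intros [x [Hx ->]]. eapply Rle_trans; [apply cauchy_schwarz|].
  rewrite Hx, Rmult_1_r. apply opnorm_unit, Hx.
Qed.

End OperatorNorm.
End Operators.

Lemma approx_eigenvalue_spectrum {H : HilbertSpace} (A : H -> H) mu :
  approx_eigenvalue A mu -> spectrum A mu.
Proof.
  intros Hap [B [[_ [_ [M HM]]] [HBA _]]].
  assert (HM1 : 0 < / (Rabs M + 1)) by (apply Rinv_0_lt_compat; pose proof (Rabs_pos M); lra).
  destruct (Hap _ HM1) as [x [Hx Hs]].
  specialize (HM (shift A mu x)). rewrite (HBA x : B (shift A mu x) = x), Hx in HM.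
  pose proof (Rle_abs M). pose proof (vnorm_ge0 (shift A mu x)).
  assert (Rabs M * / (Rabs M + 1) < 1).
  { apply Rmult_lt_reg_r with (r := Rabs M + 1); [pose proof (Rabs_pos M); lra|].
    rewrite Rmult_assoc, Rinv_l by (pose proof (Rabs_pos M); lra). lra. }
  assert (M * vnorm (shift A mu x) <= Rabs M * / (Rabs M + 1)).
  { apply Rle_trans with (Rabs M * vnorm (shift A mu x)); [nra|].
    apply Rmult_le_compat_l; [apply Rabs_pos | lra]. }
  lra.
Qed.

Lemma bounded_right_inverse {H : HilbertSpace} (T : H -> H) c :
  0 < c -> bounded_below T c -> (forall y, exists x, T x = y) ->
  exists B : H -> H, (forall y, T (B y) = y) /\ (forall y, vnorm (B y) <= / c * vnorm y).
Proof.
  intros hc hb hs.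
  exists (fun y => proj1_sig (constructive_indefinite_description _ (hs y))).
  split; intros y; destruct (constructive_indefinite_description _ (hs y)) as [x Hx]; simpl;
    auto.
  specialize (hb x). rewrite Hx in hb. apply Rmult_le_reg_l with (r := c); auto.
  rewrite <- Rmult_assoc, Rinv_r, Rmult_1_l by lra. exact hb.
Qed.

Section SpectrumOnCircle.
Context {H : HilbertSpace} {A : H -> H} {a : R} (hA : bounded_linear A) (hN : is_opnorm A a).

Lemma shift_change mu lam x : shift A mu x = vsub (shift A lam x) (vscal (Csub mu lam) x).
Proof.
  unfold shift. rewrite <- vscal_sub_l, vsub_vsub_vsub, vsub_diag, vsub_vzero. reflexivity.
Qed.

Lemma bounded_below_change lam mu c :
  bounded_below (shift A lam) c -> bounded_below (shift A mu) (c - Cmod (Csub mu lam)).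
Proof.
  intros hb x. rewrite (shift_change mu lam). eapply Rle_trans; [|apply vnorm_sub_ge].
  rewrite vnorm_scal. specialize (hb x). lra.
Qed.

(* The Neumann-series argument, as a fixed point of x |-> mu^-1 (A x - y). *)
Lemma shift_surj_outside_disc mu : 0 <= a -> a < Cmod mu ->
  forall y, exists x, shift A mu x = y.
Proof.
  intros ha hmu y. assert (Hm : 0 < Cmod mu) by lra.
  destruct (contraction_fixed_point (fun _ => True) (fun x => vscal (Cinv mu) (vsub (A x) y))
              (a / Cmod mu) vzero) as [x [_ Hx]]; auto.
  - split; [unfold Rdiv; apply Rmult_le_pos; [lra | left; apply Rinv_0_lt_compat; lra]|].
    apply Rmult_lt_reg_r with (r := Cmod mu); auto.
    unfold Rdiv. rewrite Rmult_assoc, Rinv_l; lra.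
  - intros x1 x2 _ _.
    rewrite <- vscal_sub_r, vsub_vsub_vsub, vsub_diag, vsub_vzero, <- lin_sub by auto.
    rewrite vnorm_scal, Cmod_Cinv by auto.
    pose proof (opnorm_bound hA hN (vsub x1 x2)).
    unfold Rdiv. rewrite (Rmult_comm a), Rmult_assoc.
    apply Rmult_le_compat_l; auto. left; apply Rinv_0_lt_compat; auto.
  - intros u l _ _. exact I.
  - exists x. unfold shift. rewrite <- Hx at 2. rewrite vscal_assoc.
    replace (Cmul mu (Cinv mu)) with C1 by (rewrite <- (Cinv_l mu Hm); Cring).
    rewrite vscal_one. apply vsub_sub_r.
Qed.

(* Step outward to mu = (1 + eta) lam, where A - mu is onto with a bounded inverse B,
   and solve (A - lam) x = y as the fixed point of x |-> B (y - (mu - lam) x). *)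
Lemma shift_surj_on_circle lam c : 0 < a -> Cmod lam = a -> 0 < c ->
  bounded_below (shift A lam) c -> forall y, exists x, shift A lam x = y.
Proof.
  intros ha hl hc hb y.
  set (eta := c / (4 * a)).
  assert (Heta : 0 < eta) by (unfold eta; apply Rdiv_lt_0_compat; lra).
  set (mu := Cmul lam (RtoC (1 + eta))).
  set (d := Csub mu lam).
  assert (Hd : Cmod d = c / 4).
  { replace d with (Cmul (RtoC eta) lam) by (unfold d, mu; Cring).
    rewrite Cmod_scal_pos, hl by lra. unfold eta. field. lra. }
  assert (Hmu : a < Cmod mu).
  { unfold mu. rewrite Cmod_mul, Cmod_RtoC, Rabs_pos_eq, hl by lra. nra. }
  assert (hbm : bounded_below (shift A mu) (3 * c / 4)).
  { replace (3 * c / 4) with (c - Cmod (Csub mu lam)) by (fold d; rewrite Hd; field).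
    apply bounded_below_change, hb. }
  destruct (bounded_right_inverse (shift A mu) (3 * c / 4)) as [B [HB1 HB2]]; auto.
  { lra. }
  { apply shift_surj_outside_disc; lra. }
  destruct (contraction_fixed_point (fun _ => True) (fun x => B (vsub y (vscal d x)))
              (1 / 3) vzero) as [x [_ Hx]]; auto.
  - lra.
  - intros x1 x2 _ _.
    assert (E : shift A mu (vsub (B (vsub y (vscal d x1))) (B (vsub y (vscal d x2))))
                = vscal d (vsub x2 x1)).
    { rewrite shift_sub, !HB1 by auto.
      rewrite vsub_vsub_vsub, vsub_diag, vscal_sub_r. unfold vsub at 1. rewrite vzero_add.
      apply vopp_vsub. }
    pose proof (hbm (vsub (B (vsub y (vscal d x1))) (B (vsub y (vscal d x2))))) as Hb.
    rewrite E, vnorm_scal, (vnorm_sub_sym x2), Hd in Hb.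
    pose proof (vnorm_ge0 (vsub x1 x2)). nra.
  - intros u l _ _. exact I.
  - exists x. pose proof (HB1 (vsub y (vscal d x))) as E. rewrite Hx, (shift_change mu lam) in E.
    fold d in E. rewrite <- (vsub_add (shift A lam x) (vscal d x)), E. apply vsub_add.
Qed.

(* If A - lam were bounded below it would be onto, hence invertible. *)
Lemma spectrum_circle_approx_eigenvalue lam : (exists x : H, x <> vzero) ->
  spectrum A lam -> Cmod lam = a -> approx_eigenvalue A lam.
Proof.
  intros hne hsp hl eps heps. apply NNPP. intros Hno.
  assert (hb : bounded_below (shift A lam) eps).
  { apply bounded_below_of_unit; auto; [lra|].
    intros x Hx. apply Rnot_lt_le. intros Hlt. apply Hno. exists x; auto. }
  pose proof (opnorm_ge0 hN hne) as ha.
  destruct (Req_dec a 0) as [Ha0|Ha0].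
  - destruct hne as [x Nx]. pose proof (normalize_unit x Nx) as Hu.
    set (e := vscal (RtoC (/ vnorm x)) x) in Hu.
    assert (lam = C0) by (apply Cmod_eq0; lra). subst lam.
    specialize (hb e). unfold shift in hb.
    rewrite vscal_C0, vsub_vzero, Hu in hb.
    pose proof (opnorm_unit hN e Hu). lra.
  - assert (hs : forall y, exists x, shift A lam x = y)
      by (apply (shift_surj_on_circle lam eps); auto; lra).
    destruct (bounded_right_inverse (shift A lam) eps heps hb hs) as [B [HB1 HB2]].
    apply hsp. exists B. repeat split.
    + intros x y. apply (bounded_below_inj hA lam eps); auto.
      rewrite shift_add, !HB1 by auto. reflexivity.
    + intros c x. apply (bounded_below_inj hA lam eps); auto.
      rewrite shift_scal, !HB1 by auto. reflexivity.
    + exists (/ eps). exact HB2.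
    + intros x. apply (bounded_below_inj hA lam eps); auto.
    + exact HB1.
Qed.

End SpectrumOnCircle.

(** * Normaloid operators meet [W_0(A) ∩ ∂W(A)] *)

Lemma inv_succ_pos (n : nat) : 0 < / (INR n + 1).
Proof. apply Rinv_0_lt_compat. pose proof (pos_INR n). lra. Qed.

Lemma inv_succ_small eps : 0 < eps -> exists N, forall n, (n >= N)%nat -> / (INR n + 1) < eps.
Proof.
  intros He. destruct (INR_unbounded (/ eps)) as [N HN]. exists N. intros n Hn.
  apply le_INR in Hn. pose proof (pos_INR N). pose proof (Rinv_0_lt_compat _ He).
  rewrite <- (Rinv_inv eps). apply Rinv_lt_contravar; [|lra].
  apply Rmult_lt_0_compat; lra.
Qed.

Lemma Cmod_step_outward (lam : C) (r : R) : 0 < r ->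
  exists z, Cmod z = Cmod lam + r /\ Cmod (Csub z lam) = r.
Proof.
  intros hr. destruct (Req_dec (Cmod lam) 0) as [E|E].
  - apply Cmod_eq0 in E. subst lam. exists (RtoC r).
    rewrite Cmod_C0. replace (Csub (RtoC r) C0) with (RtoC r) by Cring.
    rewrite Cmod_RtoC, Rabs_pos_eq; lra.
  - pose proof (Cmod_ge0 lam). exists (Cmul (RtoC (1 + r / Cmod lam)) lam). split.
    + rewrite Cmod_scal_pos; [field; lra|].
      assert (0 < r / Cmod lam) by (apply Rdiv_lt_0_compat; lra). lra.
    + replace (Csub (Cmul (RtoC (1 + r / Cmod lam)) lam) lam)
        with (Cmul (RtoC (r / Cmod lam)) lam) by Cring.
      rewrite Cmod_scal_pos; [field; lra|]. left; apply Rdiv_lt_0_compat; lra.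
Qed.

Lemma inner_shift_unit {H : HilbertSpace} (A : H -> H) lam x : vnorm x = 1 ->
  inner (shift A lam x) x = Csub (inner (A x) x) lam.
Proof.
  intros Hx. unfold shift. rewrite inner_sub_l, inner_scal_l, inner_self_real, sqnorm_1_of_vnorm
    by auto.
  f_equal. Cring.
Qed.

Section ApproxEigenvalueOnCircle.
Context {H : HilbertSpace} {A : H -> H} {a : R} (hN : is_opnorm A a).
Variable lam : C.
Hypotheses (hl : Cmod lam = a) (hap : approx_eigenvalue A lam).

Lemma approx_eigenvector_estimates x : vnorm x = 1 ->
  Rabs (vnorm (A x) - a) <= vnorm (shift A lam x) /\
  Cmod (Csub (inner (A x) x) lam) <= vnorm (shift A lam x).
Proof.
  intros Hx. split.
  - assert (E : vnorm (vscal lam x) = a) by (rewrite vnorm_scal, Hx, hl; ring).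
    pose proof (vnorm_sub_ge (vscal lam x) (A x)) as E1.
    pose proof (vnorm_sub_ge (A x) (vscal lam x)).
    rewrite vnorm_sub_sym in E1. unfold shift. apply Rabs_le. lra.
  - rewrite <- inner_shift_unit by auto. eapply Rle_trans; [apply cauchy_schwarz|].
    rewrite Hx. lra.
Qed.

Lemma approx_eigenvalue_maxnumrange : maxnumrange A a lam.
Proof.
  set (xs n := proj1_sig (constructive_indefinite_description _ (hap _ (inv_succ_pos n)))).
  assert (Hxs : forall n, vnorm (xs n) = 1 /\ vnorm (shift A lam (xs n)) < / (INR n + 1)).
  { intros n. unfold xs. destruct (constructive_indefinite_description _ _) as [x Hx]. exact Hx. }
  exists xs. repeat split.
  - intros n; apply Hxs.
  - intros e He. destruct (inv_succ_small e He) as [N HN]. exists N. intros n Hn.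
    destruct (Hxs n) as [Hu Hs]. destruct (approx_eigenvector_estimates _ Hu).
    specialize (HN n Hn). unfold Rdist. lra.
  - intros e He. destruct (inv_succ_small e He) as [N HN]. exists N. intros n Hn.
    destruct (Hxs n) as [Hu Hs]. destruct (approx_eigenvector_estimates _ Hu).
    specialize (HN n Hn). unfold Rdist.
    rewrite Rminus_0_r, Rabs_pos_eq by apply Cmod_ge0. lra.
Qed.

Lemma approx_eigenvalue_boundary : boundary (numrange A) lam.
Proof.
  intros e He. split.
  - destruct (hap e He) as [x [Hx Hs]]. exists (inner (A x) x). split.
    + exists x; auto.
    + destruct (approx_eigenvector_estimates x Hx). lra.
  - destruct (Cmod_step_outward lam (e / 2)) as [z [Hz Hzl]]; [lra|].
    exists z. split; [|lra].
    intros Wz. pose proof (Cmod_numrange_le hN z Wz). lra.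
Qed.

End ApproxEigenvalueOnCircle.

(** * Numerical radius equal to the norm *)

Lemma ValAdh_near (un : nat -> R) l : ValAdh un l ->
  forall e N, 0 < e -> exists p, (N <= p)%nat /\ Rabs (un p - l) < e.
Proof.
  intros Hv e N He. destruct (Hv (fun y => Rabs (y - l) < e) N) as [p Hp]; eauto.
  exists (mkposreal e He). intros y Hy. exact Hy.
Qed.

(* Bolzano-Weierstrass twice: on the real parts, then along a subsequence on the imaginary parts. *)
Lemma C_bounded_cluster_point (q : nat -> C) a : (forall k, Cmod (q k) <= a) ->
  exists mu, forall e N, 0 < e -> exists k, (N <= k)%nat /\ Cmod (Csub (q k) mu) < e.
Proof.
  intros Hq.
  assert (HR : forall k, -a <= Re (q k) <= a).
  { intros k. pose proof (Rabs_Re_le_Cmod (q k)). specialize (Hq k).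
    pose proof (Rle_abs (Re (q k))). pose proof (Rle_abs (- Re (q k))).
    rewrite Rabs_Ropp in *. lra. }
  assert (HI : forall k, -a <= Im (q k) <= a).
  { intros k. pose proof (Rabs_Im_le_Cmod (q k)). specialize (Hq k).
    pose proof (Rle_abs (Im (q k))). pose proof (Rle_abs (- Im (q k))).
    rewrite Rabs_Ropp in *. lra. }
  destruct (Bolzano_Weierstrass (fun k => Re (q k)) _ (compact_P3 (-a) a) HR) as [c Hc].
  assert (Hphi : forall j : nat, exists k, (j <= k)%nat /\ Rabs (Re (q k) - c) < / (INR j + 1))
    by (intros j; apply (ValAdh_near _ _ Hc), inv_succ_pos).
  set (phi j := proj1_sig (constructive_indefinite_description _ (Hphi j))).
  assert (Hphi2 : forall j, (j <= phi j)%nat /\ Rabs (Re (q (phi j)) - c) < / (INR j + 1)).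
  { intros j. unfold phi. destruct (constructive_indefinite_description _ _). simpl. auto. }
  destruct (Bolzano_Weierstrass (fun j => Im (q (phi j))) _ (compact_P3 (-a) a)
              (fun j => HI (phi j))) as [d Hd].
  exists (mkC c d). intros e N He.
  destruct (inv_succ_small (e / 2)) as [M HM]; [lra|].
  destruct (ValAdh_near _ _ Hd (e / 2) (max N M)) as [j [Hj Hjd]]; [lra|].
  exists (phi j). destruct (Hphi2 j) as [Hj1 Hj2]. split; [lia|].
  specialize (HM j ltac:(lia)).
  eapply Rle_lt_trans; [apply Cmod_le_Rabs_add|]. simpl. unfold Rminus in *. lra.
Qed.

Lemma sqnorm_shift_circle {H : HilbertSpace} (A : H -> H) (a : R) (mu : C) (x : H) :
  0 <= a -> Cmod mu = a -> vnorm x = 1 -> vnorm (A x) <= a ->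
  sqnorm (shift A mu x) <= 2 * a * Cmod (Csub (inner (A x) x) mu).
Proof.
  intros ha hmu hx hAx. set (q := inner (A x) x).
  assert (Hexp : sqnorm (shift A mu x) = sqnorm (A x) - 2 * Re (Cmul (Cconj mu) q) + a * a).
  { unfold shift, vsub. rewrite vopp_scal, vscal_assoc, sqnorm_add, sqnorm_scal, inner_scal_r,
      (sqnorm_1_of_vnorm x hx), Cmod_mul, Cmod_opp, Cmod_C1, hmu. unfold q. simpl. ring. }
  assert (HRe : a * a - a * Cmod (Csub q mu) <= Re (Cmul (Cconj mu) q)).
  { replace (Cmul (Cconj mu) q) with (Cadd (Cmul (Cconj mu) mu) (Cmul (Cconj mu) (Csub q mu)))
      by Cring.
    pose proof (Re_le_Cmod (Copp (Cmul (Cconj mu) (Csub q mu)))) as E.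
    rewrite Cmod_opp, Cmod_mul, Cmod_conj, hmu in E.
    pose proof (Cmod_sqr mu) as Emu. rewrite hmu in Emu. simpl in *. nra. }
  assert (sqnorm (A x) <= a * a)
    by (rewrite <- vnorm_sqr; pose proof (vnorm_ge0 (A x)); nra).
  lra.
Qed.

(* A cluster point of numerical values of modulus tending to ||A|| is an approximate
   eigenvalue. *)
Lemma numradius_eq_norm_normaloid {H : HilbertSpace} (A : H -> H) a :
  is_opnorm A a -> 0 <= a ->
  (forall eta, 0 < eta -> exists x, vnorm x = 1 /\ a - eta < Cmod (inner (A x) x)) ->
  normaloid A a.
Proof.
  intros hN ha hsup.
  set (xs k := proj1_sig (constructive_indefinite_description _ (hsup _ (inv_succ_pos k)))).
  assert (Hxs : forall k, vnorm (xs k) = 1 /\ a - / (INR k + 1) < Cmod (inner (A (xs k)) (xs k))).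
  { intros k. unfold xs. destruct (constructive_indefinite_description _ _). simpl. auto. }
  set (q k := inner (A (xs k)) (xs k)).
  assert (Hq : forall k, Cmod (q k) <= a)
    by (intros k; apply (Cmod_numrange_le hN); exists (xs k); split; [apply Hxs | reflexivity]).
  destruct (C_bounded_cluster_point q a Hq) as [mu Hmu].
  assert (Hmod : Cmod mu = a).
  { apply Rle_antisym.
    - apply Rnot_lt_le. intros Hlt. destruct (Hmu (Cmod mu - a) O) as [k [_ Hk]]; [lra|].
      pose proof (Cmod_sub_ge mu (q k)). rewrite Cmod_sub_sym in Hk. specialize (Hq k). lra.
    - apply Rnot_lt_le. intros Hlt. destruct (inv_succ_small ((a - Cmod mu) / 2)) as [M HM];
        [lra|].
      destruct (Hmu ((a - Cmod mu) / 2) M) as [k [Hk1 Hk2]]; [lra|].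
      specialize (HM k Hk1). destruct (Hxs k) as [_ Hk3]. fold (q k) in Hk3.
      pose proof (Cmod_sub_ge (q k) mu). lra. }
  exists mu. split; auto.
  apply approx_eigenvalue_spectrum. intros e He.
  assert (Hpos : 0 < e * e / (2 * a + 1)) by (apply Rdiv_lt_0_compat; nra).
  destruct (Hmu _ O Hpos) as [k [_ Hk]].
  exists (xs k). destruct (Hxs k) as [Hx _]. split; auto.
  pose proof (sqnorm_shift_circle A a mu (xs k) ha Hmod Hx (opnorm_unit hN _ Hx)) as Hs.
  fold (q k) in Hs.
  assert (Hse : sqnorm (shift A mu (xs k)) < e * e).
  { eapply Rle_lt_trans; [exact Hs|].
    apply Rle_lt_trans with (2 * a * (e * e / (2 * a + 1))).
    - apply Rmult_le_compat_l; lra.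
    - apply Rmult_lt_reg_r with (r := 2 * a + 1); [lra|].
      unfold Rdiv. rewrite Rmult_assoc, (Rmult_assoc (e * e)), Rinv_l by lra. nra. }
  rewrite <- vnorm_sqr in Hse. pose proof (vnorm_ge0 (shift A mu (xs k))). nra.
Qed.

(** * Values of a two-dimensional compression *)

(* For orthonormal e, z with A e = p e + s z, u = <A z, e> and d = <A z, z>, the value of
   <A (e + t z), e + t z> is [compression_form p s u d t]. *)
Definition Csqnorm (t : C) : R := Cmod t * Cmod t.
Definition form_lin (s : R) (u t : C) : C := Cadd (Cmul (Cconj t) (RtoC s)) (Cmul t u).
Definition compression_form (p : C) (s : R) (u d t : C) : C :=
  Cadd (Cadd p (form_lin s u t)) (Cmul (RtoC (Csqnorm t)) d).

Lemma Csqnorm_ge0 t : 0 <= Csqnorm t.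
Proof. unfold Csqnorm. pose proof (Cmod_ge0 t). nra. Qed.

Lemma Cmul_conj_r t : Cmul t (Cconj t) = RtoC (Csqnorm t).
Proof. unfold Csqnorm. rewrite Cmod_sqr. apply C_ext; simpl; ring. Qed.

Definition form_lin_inv (s : R) (u v : C) : C :=
  Cmul (RtoC (/ (Cmod u * Cmod u - s * s))) (Csub (Cmul (Cconj u) v) (Cmul (RtoC s) (Cconj v))).

Lemma form_lin_inv_r s u v : Cmod u * Cmod u - s * s <> 0 -> form_lin s u (form_lin_inv s u v) = v.
Proof. intros Hn. unfold form_lin, form_lin_inv. rewrite Cmod_sqr in *. apply C_ext; simpl; field; auto. Qed.

Lemma form_lin_sub s u t1 t2 : Csub (form_lin s u t1) (form_lin s u t2) = form_lin s u (Csub t1 t2).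
Proof. unfold form_lin. Cring. Qed.

Lemma form_lin_inv_sub s u v1 v2 :
  Csub (form_lin_inv s u v1) (form_lin_inv s u v2) = form_lin_inv s u (Csub v1 v2).
Proof. unfold form_lin_inv. Cring. Qed.

Lemma Cmod_form_lin_le s u t : 0 <= s -> Cmod (form_lin s u t) <= (s + Cmod u) * Cmod t.
Proof.
  intros hs. unfold form_lin. eapply Rle_trans; [apply Cmod_add_le|].
  rewrite !Cmod_mul, Cmod_conj, Cmod_RtoC, Rabs_pos_eq by auto. lra.
Qed.

Lemma Cmod_form_lin_inv_le s u v dl : 0 <= s -> 0 < dl -> dl <= Rabs (s - Cmod u) ->
  dl * Cmod (form_lin_inv s u v) <= Cmod v.
Proof.
  intros hs hd hdu. unfold form_lin_inv. rewrite Cmod_mul, Cmod_RtoC.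
  pose proof (Cmod_ge0 u). pose proof (Cmod_ge0 v).
  assert (Hb : Cmod (Csub (Cmul (Cconj u) v) (Cmul (RtoC s) (Cconj v))) <= (Cmod u + s) * Cmod v).
  { eapply Rle_trans; [apply Cmod_sub_le|].
    rewrite !Cmod_mul, !Cmod_conj, Cmod_RtoC, Rabs_pos_eq by auto. lra. }
  assert (Hpos : 0 < Cmod u + s).
  { destruct (Rle_dec s (Cmod u));
      [rewrite Rabs_minus_sym, Rabs_pos_eq in hdu by lra | rewrite Rabs_pos_eq in hdu by lra];
      lra. }
  assert (Hfac : Rabs (Cmod u * Cmod u - s * s) = Rabs (s - Cmod u) * (Cmod u + s)).
  { replace (Cmod u * Cmod u - s * s) with ((Cmod u - s) * (Cmod u + s)) by ring.
    rewrite Rabs_mult, (Rabs_pos_eq (Cmod u + s)), Rabs_minus_sym by lra. reflexivity. }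
  rewrite Rabs_inv, Hfac.
  apply Rle_trans with (dl * / (Rabs (s - Cmod u) * (Cmod u + s)) * ((Cmod u + s) * Cmod v)).
  - rewrite Rmult_assoc. apply Rmult_le_compat_l; [lra|].
    apply Rmult_le_compat_l; [left; apply Rinv_0_lt_compat; nra | exact Hb].
  - replace (dl * / (Rabs (s - Cmod u) * (Cmod u + s)) * ((Cmod u + s) * Cmod v))
      with (dl / Rabs (s - Cmod u) * Cmod v) by (field; lra).
    rewrite <- (Rmult_1_l (Cmod v)) at 2. apply Rmult_le_compat_r; [lra|].
    apply Rmult_le_reg_r with (r := Rabs (s - Cmod u)); [lra|].
    unfold Rdiv. rewrite Rmult_assoc, Rinv_l; lra.
Qed.

Definition damp (t : C) : R := Csqnorm t / (1 + Csqnorm t).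

Lemma damp_bounds t : 0 <= damp t <= Csqnorm t.
Proof.
  unfold damp. pose proof (Csqnorm_ge0 t). split.
  - apply Rmult_le_pos; [lra | left; apply Rinv_0_lt_compat; lra].
  - apply Rmult_le_reg_r with (r := 1 + Csqnorm t); [lra|].
    unfold Rdiv. rewrite Rmult_assoc, Rinv_l by lra. nra.
Qed.

Lemma damp_lipschitz t1 t2 : Rabs (damp t1 - damp t2) <= (Cmod t1 + Cmod t2) * Cmod (Csub t1 t2).
Proof.
  unfold damp, Csqnorm. pose proof (Cmod_ge0 t1). pose proof (Cmod_ge0 t2).
  pose proof (Rabs_Cmod_sub_le t1 t2).
  set (x := Cmod t1) in *. set (y := Cmod t2) in *.
  replace (x * x / (1 + x * x) - y * y / (1 + y * y))
    with ((x - y) * (x + y) * / ((1 + x * x) * (1 + y * y))) by (field; nra).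
  rewrite !Rabs_mult, (Rabs_pos_eq (x + y)), Rabs_inv, (Rabs_pos_eq ((1 + x * x) * (1 + y * y)))
    by nra.
  assert (/ ((1 + x * x) * (1 + y * y)) <= 1)
    by (rewrite <- Rinv_1; apply Rinv_le_contravar; nra).
  assert (0 <= / ((1 + x * x) * (1 + y * y))) by (left; apply Rinv_0_lt_compat; nra).
  pose proof (Rabs_pos (x - y)).
  apply Rle_trans with (Rabs (x - y) * (x + y)); [|nra].
  rewrite <- (Rmult_1_r (Rabs (x - y) * (x + y))) at 2. apply Rmult_le_compat_l; nra.
Qed.

Definition form_perturbation (s : R) (u D t : C) : C :=
  Cmul (RtoC (damp t)) (Csub D (form_lin s u t)).

Lemma form_perturbation_lipschitz a s u D r0 t1 t2 :
  0 < a -> 0 <= s <= a -> Cmod u <= a -> Cmod D <= 2 * a -> 0 <= r0 <= 1 ->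
  Cmod t1 <= r0 -> Cmod t2 <= r0 ->
  Cmod (Csub (form_perturbation s u D t1) (form_perturbation s u D t2))
    <= 10 * a * r0 * Cmod (Csub t1 t2).
Proof.
  intros ha hs hu hD hr h1 h2.
  replace (Csub (form_perturbation s u D t1) (form_perturbation s u D t2))
    with (Cadd (Cmul (RtoC (damp t1 - damp t2)) (Csub D (form_lin s u t1)))
               (Cmul (RtoC (damp t2)) (Csub (form_lin s u t2) (form_lin s u t1))))
    by (unfold form_perturbation; Cring).
  eapply Rle_trans; [apply Cmod_add_le|]. rewrite !Cmod_mul, !Cmod_RtoC, form_lin_sub.
  pose proof (Cmod_form_lin_le s u (Csub t2 t1) (proj1 hs)) as Hl.
  rewrite Cmod_sub_sym in Hl.
  pose proof (Cmod_form_lin_le s u t1 (proj1 hs)).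
  pose proof (Cmod_ge0 (Csub t1 t2)). pose proof (Cmod_ge0 t1). pose proof (Cmod_ge0 t2).
  assert (HD1 : Cmod (Csub D (form_lin s u t1)) <= 4 * a).
  { eapply Rle_trans; [apply Cmod_sub_le|]. nra. }
  pose proof (damp_lipschitz t1 t2). pose proof (damp_bounds t2).
  rewrite (Rabs_pos_eq (damp t2)) by lra.
  assert (T1 : Rabs (damp t1 - damp t2) * Cmod (Csub D (form_lin s u t1))
               <= (2 * r0 * Cmod (Csub t1 t2)) * (4 * a)).
  { apply Rmult_le_compat; [apply Rabs_pos | apply Cmod_ge0 | nra | lra]. }
  assert (Csqnorm t2 <= r0) by (unfold Csqnorm; nra).
  assert (T2 : damp t2 * Cmod (form_lin s u (Csub t2 t1)) <= r0 * (2 * a * Cmod (Csub t1 t2))).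
  { apply Rmult_le_compat; [lra | apply Cmod_ge0 | lra | nra]. }
  nra.
Qed.

Lemma closed_ball_limit (r0 : R) (u : nat -> C) l : (forall n, Cmod (u n) <= r0) ->
  (forall eps, 0 < eps -> exists N, forall n, (n >= N)%nat -> Cmod (Csub (u n) l) < eps) ->
  Cmod l <= r0.
Proof.
  intros Hu Hl. apply Rnot_lt_le. intros Hlt.
  destruct (Hl (Cmod l - r0)) as [N HN]; [lra|]. specialize (HN N (le_n _)).
  pose proof (Cmod_sub_ge l (u N)). rewrite Cmod_sub_sym in HN. specialize (Hu N). lra.
Qed.

Lemma compression_form_of_fixed_point p s u d t zeta :
  form_lin s u t = Csub zeta (form_perturbation s u (Csub d p) t) ->
  Cmul (RtoC (/ (1 + Csqnorm t))) (compression_form p s u d t) = Cadd p zeta.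
Proof.
  intros G. unfold form_perturbation, damp in G. unfold compression_form.
  pose proof (Csqnorm_ge0 t). set (L := form_lin s u t) in *. set (m := Csqnorm t) in *.
  assert (hk1 : / (1 + m) * (1 + m) = 1) by (field; lra).
  assert (hk2 : m / (1 + m) * (1 + m) = m) by (field; lra).
  set (k := / (1 + m)) in *. set (k' := m / (1 + m)) in *. clearbody k k' L m.
  assert (GR := f_equal Re G). assert (GI := f_equal Im G). simpl in GR, GI.
  apply C_ext; simpl; nsatz.
Qed.

(* The fixed-point problem t = form_lin_inv (zeta - damp t (d - p - form_lin t)) is a
   contraction of a small disc, since form_lin_inv has norm <= 1 / dl. *)
Lemma compression_form_fills_disc a s u d p dl zeta :
  0 < a -> 0 <= s <= a -> Cmod u <= a -> Cmod d <= a -> Cmod p <= a ->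
  0 < dl -> dl <= Rabs (s - Cmod u) ->
  Cmod zeta <= dl * Rmin 1 (dl / (20 * a)) / 2 ->
  exists t, Cmul (RtoC (/ (1 + Csqnorm t))) (compression_form p s u d t) = Cadd p zeta.
Proof.
  intros ha hs hu hd hp hdl hdu hz.
  set (r0 := Rmin 1 (dl / (20 * a))) in *.
  assert (hr0 : 0 < r0 <= 1 /\ r0 <= dl / (20 * a)).
  { assert (0 < dl / (20 * a)) by (apply Rdiv_lt_0_compat; lra).
    unfold r0. repeat split; [apply Rmin_glb_lt; lra | apply Rmin_l | apply Rmin_r]. }
  assert (h10 : 10 * a * r0 <= dl / 2).
  { destruct hr0 as [_ Hr]. apply Rmult_le_compat_l with (r := 10 * a) in Hr; [|lra].
    replace (10 * a * (dl / (20 * a))) with (dl / 2) in Hr by (field; lra). lra. }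
  set (D := Csub d p).
  assert (hD : Cmod D <= 2 * a) by (unfold D; eapply Rle_trans; [apply Cmod_sub_le | lra]).
  assert (hne : Cmod u * Cmod u - s * s <> 0).
  { intros E. assert (Eu : Cmod u = s) by (pose proof (Cmod_ge0 u); nra).
    rewrite Eu, Rminus_diag, Rabs_R0 in hdu. lra. }
  set (F t := form_lin_inv s u (Csub zeta (form_perturbation s u D t))).
  assert (HFlip : forall t1 t2, Cmod t1 <= r0 -> Cmod t2 <= r0 ->
            dl * Cmod (Csub (F t1) (F t2)) <= dl / 2 * Cmod (Csub t1 t2)).
  { intros t1 t2 h1 h2. unfold F. rewrite form_lin_inv_sub.
    replace (Csub (Csub zeta (form_perturbation s u D t1)) (Csub zeta (form_perturbation s u D t2)))
      with (Csub (form_perturbation s u D t2) (form_perturbation s u D t1)) by Cring.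
    eapply Rle_trans; [apply Cmod_form_lin_inv_le; auto; lra|].
    pose proof (form_perturbation_lipschitz a s u D r0 t2 t1 ha hs hu hD ltac:(lra) h2 h1) as Hp.
    rewrite (Cmod_sub_sym t2) in Hp. pose proof (Cmod_ge0 (Csub t1 t2)). nra. }
  assert (HF0 : F C0 = form_lin_inv s u zeta).
  { assert (E : damp C0 = 0) by (unfold damp, Csqnorm; rewrite Cmod_C0; field).
    unfold F, form_perturbation. rewrite E. f_equal. Cring. }
  destruct (C_contraction_fixed_point (fun t => Cmod t <= r0) F (1 / 2) C0) as [t [_ Ht]].
  - lra.
  - rewrite Cmod_C0; lra.
  - intros t Ht. pose proof (HFlip t C0 Ht ltac:(rewrite Cmod_C0; lra)) as Hlip.
    rewrite HF0 in Hlip. replace (Csub t C0) with t in Hlip by Cring.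
    pose proof (Cmod_form_lin_inv_le s u zeta dl (proj1 hs) hdl hdu).
    pose proof (Cmod_sub_ge (F t) (form_lin_inv s u zeta)).
    apply Rmult_le_reg_l with (r := dl); [lra|]. nra.
  - intros t1 t2 h1 h2. pose proof (HFlip t1 t2 h1 h2). pose proof (Cmod_ge0 (Csub t1 t2)).
    apply Rmult_le_reg_l with (r := dl); [lra|]. nra.
  - intros v l Hv Hl. exact (closed_ball_limit r0 v l Hv Hl).
  - exists t. apply compression_form_of_fixed_point.
    rewrite <- Ht at 1. apply form_lin_inv_r, hne.
Qed.

(* r = s / (R + al), R = sqrt(al^2 + s^2), is the double root of (R + al) r^2 - 2 s r + (R - al). *)
Lemma tangent_parameter (al s : R) : 0 < s ->
  exists r, 0 < r /\ al * (1 - r * r) + 2 * r * s = sqrt (al * al + s * s) * (1 + r * r).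
Proof.
  intros hs. set (R0 := sqrt (al * al + s * s)).
  assert (hR0 : R0 * R0 = al * al + s * s) by (apply sqrt_sqrt; nra).
  assert (hR0p : 0 <= R0) by apply sqrt_pos.
  assert (hRa : 0 < R0 + al) by (destruct (Rle_dec 0 al); nra).
  exists (s / (R0 + al)). split; [apply Rdiv_lt_0_compat; lra|].
  assert (hr : s / (R0 + al) * (R0 + al) = s) by (field; lra).
  set (r := s / (R0 + al)) in *. clearbody r R0.
  apply Rmult_eq_reg_r with (r := R0 + al); [|lra].
  assert (E : (al * (1 - r * r) + 2 * r * s) * (R0 + al) - R0 * (1 + r * r) * (R0 + al)
              = (al * al + s * s - R0 * R0)
                + (r * (R0 + al) - s) * (r * (R0 + al) + s - 2 * r * (R0 + al))) by ring.
  rewrite hR0, hr in E. lra.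
Qed.

Lemma Cmod_tangent_combination (q : C) (s r : R) :
  Re q * (1 - r * r) + 2 * r * s = sqrt (Re q * Re q + s * s) * (1 + r * r) ->
  (1 + r * r) * sqrt (Cmod q * Cmod q + s * s)
    <= Cmod (Cadd (Csub q (Cmul (RtoC (r * r)) (Cconj q))) (RtoC (2 * r * s))).
Proof.
  intros hr. set (I := Cadd (Csub q (Cmul (RtoC (r * r)) (Cconj q))) (RtoC (2 * r * s))).
  assert (hRe : Re I = sqrt (Re q * Re q + s * s) * (1 + r * r))
    by (rewrite <- hr; unfold I; simpl; ring).
  assert (hIm : Im I = Im q * (1 + r * r)) by (unfold I; simpl; ring).
  set (R0 := sqrt (Re q * Re q + s * s)) in *.
  assert (hR0 : R0 * R0 = Re q * Re q + s * s) by (apply sqrt_sqrt; nra).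
  set (S := sqrt (Cmod q * Cmod q + s * s)).
  assert (hS : S * S = Re q * Re q + Im q * Im q + s * s)
    by (unfold S; rewrite sqrt_sqrt, Cmod_sqr; [ring | pose proof (Cmod_ge0 q); nra]).
  apply Cmod_ge_of_sqr; [apply Rmult_le_pos; [nra | apply sqrt_pos]|].
  rewrite hRe, hIm.
  replace ((1 + r * r) * S * ((1 + r * r) * S)) with ((1 + r * r) * (1 + r * r) * (S * S)) by ring.
  rewrite hS. apply Req_le.
  transitivity ((1 + r * r) * (1 + r * r) * (R0 * R0 + Im q * Im q)); [rewrite hR0|]; ring.
Qed.

(* Write u = |u| z^2 with |z| = 1, q = conj z p, and t = r conj z. *)
Lemma compression_form_rotated (p u d z q : C) (s r c : R) :
  Re z * Re z + Im z * Im z = 1 -> u = Cmul (RtoC c) (Cmul z z) -> q = Cmul (Cconj z) p ->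
  Cmul (RtoC s) (Cmul (Cconj z) (compression_form p s u d (Cmul (RtoC r) (Cconj z)))) =
  Cadd (Cmul (RtoC s) (Cadd (Csub q (Cmul (RtoC (r * r)) (Cconj q))) (RtoC (2 * r * s))))
    (Cadd (Csub (RtoC (s * r * (c - s))) (Cmul (RtoC (r * r * (c - s))) (Cconj q)))
      (Cmul (RtoC (r * r)) (Cmul (Cconj z)
         (Cconj (Cadd (Cmul p (Cconj u)) (Cmul (RtoC s) (Cconj d))))))).
Proof.
  intros hz -> ->. unfold compression_form, form_lin, Csqnorm.
  rewrite Cmod_mul, Cmod_RtoC, Cmod_conj.
  assert (E : Rabs r * Cmod z * (Rabs r * Cmod z) = r * r).
  { rewrite <- (Rabs_sqr r). replace (Rabs r * Cmod z * (Rabs r * Cmod z))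
      with (Rabs r * Rabs r * (Cmod z * Cmod z)) by ring. rewrite Cmod_sqr, hz. ring. }
  rewrite E. apply C_ext; simpl; nsatz.
Qed.

Lemma compression_form_rotated_ge (p u d z : C) (s r c : R) :
  0 <= s -> 0 <= r -> Cmod z = 1 -> u = Cmul (RtoC c) (Cmul z z) ->
  Re (Cmul (Cconj z) p) * (1 - r * r) + 2 * r * s
    = sqrt (Re (Cmul (Cconj z) p) * Re (Cmul (Cconj z) p) + s * s) * (1 + r * r) ->
  s * ((1 + r * r) * sqrt (Cmod p * Cmod p + s * s))
    - (s * r * Rabs (c - s) + r * r * Rabs (c - s) * Cmod p
       + r * r * Cmod (Cadd (Cmul p (Cconj u)) (Cmul (RtoC s) (Cconj d))))
  <= s * Cmod (compression_form p s u d (Cmul (RtoC r) (Cconj z))).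
Proof.
  intros hs hr hz hu hrt.
  assert (hz2 : Re z * Re z + Im z * Im z = 1) by (rewrite <- Cmod_sqr, hz; ring).
  set (q := Cmul (Cconj z) p) in *.
  assert (hq : Cmod q = Cmod p) by (unfold q; rewrite Cmod_mul, Cmod_conj, hz; ring).
  pose proof (compression_form_rotated p u d z q s r c hz2 hu eq_refl) as Key.
  set (Y := Cadd (Cmul p (Cconj u)) (Cmul (RtoC s) (Cconj d))) in *.
  set (I := Cadd (Csub q (Cmul (RtoC (r * r)) (Cconj q))) (RtoC (2 * r * s))) in Key.
  set (Df := Cadd (Csub (RtoC (s * r * (c - s))) (Cmul (RtoC (r * r * (c - s))) (Cconj q)))
               (Cmul (RtoC (r * r)) (Cmul (Cconj z) (Cconj Y)))) in Key.
  assert (hI : (1 + r * r) * sqrt (Cmod p * Cmod p + s * s) <= Cmod I)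
    by (rewrite <- hq; apply Cmod_tangent_combination, hrt).
  assert (hDf : Cmod Df <= s * r * Rabs (c - s) + r * r * Rabs (c - s) * Cmod p + r * r * Cmod Y).
  { unfold Df. eapply Rle_trans; [apply Cmod_add_le|].
    eapply Rle_trans; [apply Rplus_le_compat_r, Cmod_sub_le|].
    rewrite !Cmod_mul, !Cmod_RtoC, !Cmod_conj, hz, hq, !Rabs_mult,
      (Rabs_pos_eq s), (Rabs_pos_eq r) by lra.
    lra. }
  replace (s * Cmod (compression_form p s u d (Cmul (RtoC r) (Cconj z))))
    with (Cmod (Cadd (Cmul (RtoC s) I) Df))
    by (rewrite <- Key, !Cmod_mul, Cmod_RtoC, Cmod_conj, hz, Rabs_pos_eq by lra; ring).
  pose proof (Cmod_sub_ge (Cmul (RtoC s) I) (Copp Df)) as E.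
  replace (Csub (Cmul (RtoC s) I) (Copp Df)) with (Cadd (Cmul (RtoC s) I) Df) in E by Cring.
  rewrite Cmod_opp, Cmod_scal_pos in E by lra.
  assert (s * ((1 + r * r) * sqrt (Cmod p * Cmod p + s * s)) <= s * Cmod I)
    by (apply Rmult_le_compat_l; lra).
  lra.
Qed.

(* Here Y = p conj u + s conj d is the quantity <A e, A z> of the compression. *)
Lemma compression_form_large a kap sig s p u d :
  0 < a -> 0 < sig -> sig <= s -> Cmod p <= a -> 0 <= kap ->
  Cmod (Cadd (Cmul p (Cconj u)) (Cmul (RtoC s) (Cconj d))) <= a * kap ->
  exists t, (1 + Csqnorm t) * (sqrt (Cmod p * Cmod p + s * s) - Rabs (s - Cmod u)
                                - a * (Rabs (s - Cmod u) + kap) / sig)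
            <= Cmod (compression_form p s u d t).
Proof.
  intros ha hsig hs hp hk hY.
  pose proof (Cmod_ge0 p). pose proof (Cmod_ge0 u).
  set (dl := Rabs (s - Cmod u)). assert (hdl : 0 <= dl) by apply Rabs_pos.
  set (S := sqrt (Cmod p * Cmod p + s * s)).
  assert (hS : S * S = Cmod p * Cmod p + s * s) by (apply sqrt_sqrt; nra).
  assert (hS0 : 0 <= S) by apply sqrt_pos.
  assert (hfr : a * (dl + kap) / s <= a * (dl + kap) / sig).
  { apply Rmult_le_compat_l; [nra|]. apply Rinv_le_contravar; lra. }
  assert (hfr0 : 0 <= a * (dl + kap) / s)
    by (apply Rmult_le_pos; [nra | left; apply Rinv_0_lt_compat; lra]).
  destruct (Req_dec (Cmod u) 0) as [U0|U0].
  - exists C0. unfold Csqnorm. rewrite Cmod_C0.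
    replace (compression_form p s u d C0) with p
      by (unfold compression_form, form_lin, Csqnorm; rewrite Cmod_C0; Cring).
    assert (dl = s) by (unfold dl; rewrite U0, Rminus_0_r, Rabs_pos_eq; lra).
    assert (S <= Cmod p + s) by (apply sqrt_le_of_sqr; nra). nra.
  - set (c := Cmod u) in *. assert (hc : 0 < c) by lra.
    destruct (unit_sqrt_exists (Cmul (RtoC (/ c)) u)) as [z [hz hzz]].
    { rewrite Cmod_scal_pos by (left; apply Rinv_0_lt_compat; lra). fold c. field. lra. }
    assert (hu : u = Cmul (RtoC c) (Cmul z z))
      by (rewrite hzz; apply C_ext; simpl; field; lra).
    destruct (tangent_parameter (Re (Cmul (Cconj z) p)) s) as [r [hr hrt]]; [lra|].
    exists (Cmul (RtoC r) (Cconj z)).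
    pose proof (compression_form_rotated_ge p u d z s r c ltac:(lra) ltac:(lra) hz hu hrt) as Hge.
    replace (Csqnorm (Cmul (RtoC r) (Cconj z))) with (r * r)
      by (unfold Csqnorm; rewrite Cmod_scal_pos, Cmod_conj, hz by lra; ring).
    fold S in Hge. rewrite Rabs_minus_sym in Hge. fold dl in Hge.
    set (N := Cmod (compression_form p s u d (Cmul (RtoC r) (Cconj z)))) in *. clearbody N.
    assert (hN : (1 + r * r) * S - r * dl - r * r * (a * (dl + kap) / s) <= N).
    { apply Rmult_le_reg_l with (r := s); [lra|].
      replace (s * ((1 + r * r) * S - r * dl - r * r * (a * (dl + kap) / s)))
        with (s * ((1 + r * r) * S) - (s * r * dl + r * r * dl * a + r * r * (a * kap)))
        by (field; lra).
      assert (r * r * dl * Cmod p <= r * r * dl * a) by (apply Rmult_le_compat_l; nra).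
      assert (r * r * Cmod (Cadd (Cmul p (Cconj u)) (Cmul (RtoC s) (Cconj d))) <= r * r * (a * kap))
        by (apply Rmult_le_compat_l; nra).
      lra. }
    assert (r <= 1 + r * r) by nra.
    assert (r * dl <= (1 + r * r) * dl) by nra.
    assert (r * r * (a * (dl + kap) / s) <= (1 + r * r) * (a * (dl + kap) / sig)) by nra.
    nra.
Qed.

(** * Numerical radius below the norm *)

Lemma numrange_scaled {H : HilbertSpace} {A : H -> H} (hA : bounded_linear A) (x : H) :
  x <> vzero -> numrange A (Cmul (RtoC (/ sqnorm x)) (inner (A x) x)).
Proof.
  intros Nx. exists (vscal (RtoC (/ vnorm x)) x). split; [apply normalize_unit, Nx|].
  rewrite (lin_scal hA), inner_scal_l, inner_scal_r. pose proof (vnorm_pos x Nx).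
  rewrite <- vnorm_sqr. apply C_ext; simpl; field; lra.
Qed.

Lemma sqnorm_sub_proj {H : HilbertSpace} (y e : H) : sqnorm e = 1 ->
  sqnorm (vsub y (vscal (inner y e) e)) = sqnorm y - Cmod (inner y e) * Cmod (inner y e).
Proof.
  intros He. unfold vsub. rewrite vopp_scal, vscal_assoc, sqnorm_add, sqnorm_scal, inner_scal_r, He.
  rewrite Cmod_mul, Cmod_opp, Cmod_C1, !Rmult_1_l, Cmod_sqr. simpl. ring.
Qed.

Lemma orthogonal_decomposition {H : HilbertSpace} (y e : H) : sqnorm e = 1 ->
  let s := vnorm (vsub y (vscal (inner y e) e)) in 0 < s ->
  exists z, sqnorm z = 1 /\ inner e z = C0 /\ y = vadd (vscal (inner y e) e) (vscal (RtoC s) z).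
Proof.
  intros He s Hs. set (g := vsub y (vscal (inner y e) e)) in *.
  exists (vscal (RtoC (/ s)) g). repeat split.
  - rewrite sqnorm_scal, Cmod_RtoC, Rabs_inv, Rabs_pos_eq, <- vnorm_sqr by lra.
    fold s. field. lra.
  - rewrite inner_scal_r. unfold g. rewrite inner_conj_sym, inner_sub_l, inner_scal_l,
      inner_self_real, He. Cring.
  - rewrite vscal_assoc.
    replace (Cmul (RtoC s) (RtoC (/ s))) with C1 by (apply C_ext; simpl; field; lra).
    rewrite vscal_one. unfold g. rewrite vadd_comm. symmetry. apply vsub_add.
Qed.

(* Test |A (e + t z)| <= a |e + t z| at t = (kap / (a |Y|)) Y, where Y = <A e, A z>. *)
Lemma Cmod_inner_near_maximal {H : HilbertSpace} {A : H -> H} {a : R}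
  (hA : bounded_linear A) (hN : is_opnorm A a) (kap : R) (e z : H) :
  0 < a -> 0 < kap -> sqnorm e = 1 -> sqnorm z = 1 -> inner e z = C0 ->
  a * a - kap * kap <= sqnorm (A e) -> Cmod (inner (A e) (A z)) <= a * kap.
Proof.
  intros ha hk He Hz Hez HAe.
  set (Y := inner (A e) (A z)).
  destruct (Req_dec (Cmod Y) 0) as [Y0|Y0]; [rewrite Y0; nra|].
  pose proof (Cmod_ge0 Y). assert (hY : 0 < Cmod Y) by lra.
  set (rho := kap / (a * Cmod Y)).
  assert (hrho : 0 < rho) by (apply Rdiv_lt_0_compat; nra).
  set (t := Cmul (RtoC rho) Y).
  pose proof (opnorm_sqnorm_bound hA hN (vadd e (vscal t z)) ltac:(lra)) as Hb.
  rewrite sqnorm_add, sqnorm_scal, inner_scal_r, Hez, He, Hz, (lin_add hA), (lin_scal hA),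
    sqnorm_add, sqnorm_scal, inner_scal_r in Hb. fold Y in Hb.
  assert (Ht : Cmod t * Cmod t = rho * rho * (Cmod Y * Cmod Y))
    by (unfold t; rewrite Cmod_scal_pos by lra; ring).
  assert (Hre : Re (Cmul (Cconj t) Y) = rho * (Cmod Y * Cmod Y))
    by (unfold t; rewrite Cmod_sqr; simpl; ring).
  rewrite Ht, Hre in Hb. simpl in Hb.
  pose proof (sqnorm_ge0 (A z)).
  assert (E : rho * Cmod Y = kap / a) by (unfold rho; field; lra).
  assert (Hm : 2 * (kap / a) * Cmod Y <= kap * kap + a * a * ((kap / a) * (kap / a))).
  { rewrite <- E. assert (0 <= rho * rho * (Cmod Y * Cmod Y) * sqnorm (A z)) by
      (apply Rmult_le_pos; nra). nra. }
  replace (a * a * (kap / a * (kap / a))) with (kap * kap) in Hm by (field; lra).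
  apply Rmult_le_reg_l with (r := kap / a); [apply Rdiv_lt_0_compat; lra|].
  replace (kap / a * (a * kap)) with (kap * kap) by (field; lra). lra.
Qed.

Section Compression.
Context {H : HilbertSpace} {A : H -> H} (hA : bounded_linear A).
Variables (e z : H) (p : C) (s : R).
Hypotheses (he : sqnorm e = 1) (hz : sqnorm z = 1) (hez : inner e z = C0)
  (hAe : A e = vadd (vscal p e) (vscal (RtoC s) z)).

Lemma inner_self_e : inner e e = C1.
Proof. rewrite inner_self_real, he. Cring. Qed.

Lemma inner_self_z : inner z z = C1.
Proof. rewrite inner_self_real, hz. Cring. Qed.

Lemma inner_z_e : inner z e = C0.
Proof. rewrite inner_conj_sym, hez. Cring. Qed.

Lemma compression_form_value t :
  inner (A (vadd e (vscal t z))) (vadd e (vscal t z)) =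
  compression_form p s (inner (A z) e) (inner (A z) z) t.
Proof.
  assert (P1 : inner (A e) e = p)
    by (rewrite hAe, inner_add_l, !inner_scal_l, inner_self_e, inner_z_e; Cring).
  assert (P2 : inner (A e) z = RtoC s)
    by (rewrite hAe, inner_add_l, !inner_scal_l, inner_self_z, hez; Cring).
  rewrite (lin_add hA), (lin_scal hA), !inner_add_l, !inner_add_r, !inner_scal_l, !inner_scal_r,
    P1, P2.
  unfold compression_form, form_lin. rewrite <- Cmul_conj_r. Cring.
Qed.

Lemma numrange_compression_form t :
  numrange A (Cmul (RtoC (/ (1 + Csqnorm t)))
                (compression_form p s (inner (A z) e) (inner (A z) z) t)).
Proof.
  assert (E : sqnorm (vadd e (vscal t z)) = 1 + Csqnorm t)
    by (rewrite sqnorm_add, sqnorm_scal, inner_scal_r, hez, he, hz; unfold Csqnorm; simpl; ring).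
  assert (Nx : vadd e (vscal t z) <> vzero).
  { intros E0. rewrite E0 in E. unfold sqnorm in E. rewrite inner_zero_l in E. simpl in E.
    pose proof (Csqnorm_ge0 t). lra. }
  rewrite <- E, <- compression_form_value. apply numrange_scaled; auto.
Qed.

Lemma inner_A_e_A_z :
  inner (A e) (A z) =
  Cadd (Cmul p (Cconj (inner (A z) e))) (Cmul (RtoC s) (Cconj (inner (A z) z))).
Proof.
  rewrite hAe, inner_add_l, !inner_scal_l, (inner_conj_sym (A z) e), (inner_conj_sym (A z) z).
  apply C_ext; simpl; ring.
Qed.

End Compression.

Lemma maxnumrange_near {H : HilbertSpace} (A : H -> H) a lam : maxnumrange A a lam ->
  forall h r, 0 < h -> 0 < r ->
  exists e, vnorm e = 1 /\ a - h < vnorm (A e) /\ Cmod (Csub (inner (A e) e) lam) < r.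
Proof.
  intros [xs [hu [hc1 hc2]]] h r hh hr.
  destruct (hc1 h hh) as [N1 HN1]. destruct (hc2 r hr) as [N2 HN2].
  set (n := max N1 N2). specialize (HN1 n ltac:(lia)). specialize (HN2 n ltac:(lia)).
  unfold Rdist in HN1, HN2. rewrite Rminus_0_r, Rabs_pos_eq in HN2 by apply Cmod_ge0.
  exists (xs n). repeat split; auto. apply Rabs_def2 in HN1. lra.
Qed.

Section NumradiusBelowNorm.
Context {H : HilbertSpace} {A : H -> H} {a : R} (hA : bounded_linear A) (hN : is_opnorm A a).
Variable w : R.
Hypotheses (hw : 0 <= w) (hwa : w < a) (hW : forall z, numrange A z -> Cmod z <= w).

Let gam := a - w.
Let sig := gam / 2.
Let kap := gam * gam / (16 * a).
Let rho := kap * Rmin 1 (kap / (20 * a)) / 2.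

Lemma gap_facts : 0 < a /\ 0 < gam <= a /\ 0 < kap <= gam / 16 /\ 0 < rho.
Proof.
  assert (ha : 0 < a) by lra. assert (hg : 0 < gam <= a) by (unfold gam; lra).
  assert (hk : 0 < kap) by (apply Rdiv_lt_0_compat; nra).
  repeat split; try lra.
  - apply Rmult_le_reg_r with (r := 16 * a); [lra|].
    unfold kap, Rdiv. rewrite Rmult_assoc, Rinv_l by lra. nra.
  - assert (0 < Rmin 1 (kap / (20 * a)))
      by (apply Rmin_glb_lt; [lra | apply Rdiv_lt_0_compat; lra]).
    unfold rho. nra.
Qed.

Section CompressedOperator.
Variables (p u d : C) (s : R).
Hypothesis hQ : forall t, numrange A (Cmul (RtoC (/ (1 + Csqnorm t))) (compression_form p s u d t)).

Lemma compression_nondegenerate :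
  sig <= s -> Cmod p <= a -> a - kap <= sqrt (Cmod p * Cmod p + s * s) ->
  Cmod (Cadd (Cmul p (Cconj u)) (Cmul (RtoC s) (Cconj d))) <= a * kap ->
  kap <= Rabs (s - Cmod u).
Proof.
  intros hs hp hS hY. destruct gap_facts as [ha [hg [hk hrho]]].
  apply Rnot_lt_le. intros Hdeg.
  destruct (compression_form_large a kap sig s p u d) as [t Ht]; auto; try lra.
  { unfold sig; lra. }
  pose proof (hW _ (hQ t)) as Hw. pose proof (Csqnorm_ge0 t).
  rewrite Cmod_scal_pos in Hw by (left; apply Rinv_0_lt_compat; lra).
  assert (Hm : sqrt (Cmod p * Cmod p + s * s) - Rabs (s - Cmod u)
               - a * (Rabs (s - Cmod u) + kap) / sig <= w).
  { apply Rmult_le_reg_l with (r := 1 + Csqnorm t); [lra|].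
    eapply Rle_trans; [apply Ht|].
    apply Rmult_le_reg_l with (r := / (1 + Csqnorm t)); [apply Rinv_0_lt_compat; lra|].
    rewrite <- Rmult_assoc, Rinv_l, Rmult_1_l by lra. exact Hw. }
  assert (Hfr : a * (Rabs (s - Cmod u) + kap) / sig <= gam / 4).
  { apply Rle_trans with (a * (2 * kap) / sig).
    - apply Rmult_le_compat_r; [left; apply Rinv_0_lt_compat; unfold sig; lra|].
      apply Rmult_le_compat_l; lra.
    - apply Req_le. unfold sig, kap. field. lra. }
  unfold gam in *. lra.
Qed.

Lemma compression_disc_in_numrange :
  0 <= s <= a -> Cmod u <= a -> Cmod d <= a -> Cmod p <= a -> kap <= Rabs (s - Cmod u) ->
  forall zeta, Cmod zeta <= rho -> numrange A (Cadd p zeta).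
Proof.
  intros hs hu hd hp hnd zeta hz. destruct gap_facts as [ha [hg [hk hrho]]].
  destruct (compression_form_fills_disc a s u d p kap zeta) as [t <-]; auto; lra.
Qed.

End CompressedOperator.

Lemma sqr_lower_bound_of_near x : a - kap * kap / (2 * a) < x -> a * a - kap * kap <= x * x.
Proof.
  intros hx. destruct gap_facts as [ha [hg [hk hrho]]].
  set (h := kap * kap / (2 * a)) in *.
  assert (h * (2 * a) = kap * kap) by (unfold h; field; lra).
  assert (0 <= h) by (unfold h; apply Rmult_le_pos; [nra | left; apply Rinv_0_lt_compat; lra]).
  assert (h <= a) by nra.
  nra.
Qed.

Lemma near_maximal_compression lam : maxnumrange A a lam ->
  exists p u d s,
    Cmod (Csub p lam) < rho / 2 /\ Cmod p <= w /\ sig <= s <= a /\ Cmod u <= a /\ Cmod d <= a /\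
    a - kap <= sqrt (Cmod p * Cmod p + s * s) /\
    Cmod (Cadd (Cmul p (Cconj u)) (Cmul (RtoC s) (Cconj d))) <= a * kap /\
    forall t, numrange A (Cmul (RtoC (/ (1 + Csqnorm t))) (compression_form p s u d t)).
Proof.
  intros hmax. destruct gap_facts as [ha [hg [hk hrho]]].
  assert (hh : 0 < kap * kap / (2 * a)) by (apply Rdiv_lt_0_compat; nra).
  destruct (maxnumrange_near A a lam hmax _ (rho / 2) hh ltac:(lra)) as [e [he [hAe hpl]]].
  set (p := inner (A e) e) in *.
  assert (he1 : sqnorm e = 1) by (apply sqnorm_1_of_vnorm, he).
  assert (hAe2 : a * a - kap * kap <= sqnorm (A e))
    by (rewrite <- vnorm_sqr; apply sqr_lower_bound_of_near, hAe).
  assert (hAea : sqnorm (A e) <= a * a)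
    by (pose proof (opnorm_sqnorm_bound hA hN e ltac:(lra)) as E; rewrite he1 in E; lra).
  assert (hpw : Cmod p <= w) by (apply hW; exists e; auto).
  pose proof (Cmod_ge0 p).
  set (s := vnorm (vsub (A e) (vscal p e))).
  assert (hs2 : s * s = sqnorm (A e) - Cmod p * Cmod p)
    by (unfold s; rewrite vnorm_sqr; apply sqnorm_sub_proj, he1).
  assert (hs : sig <= s).
  { apply Rle_of_sqr_le; [apply vnorm_ge0|]. rewrite hs2.
    assert (kap * kap <= gam * gam / 256) by nra.
    assert (w = a - gam) by (unfold gam; ring).
    unfold sig. nra. }
  destruct (orthogonal_decomposition (A e) e he1 ltac:(fold p s; unfold sig in hs; lra))
    as [z [hz1 [hez hdec]]]. fold p s in hdec.
  assert (hz : vnorm z = 1) by (apply vnorm_1_of_sqnorm, hz1).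
  assert (hAz : vnorm (A z) <= a) by (apply (opnorm_unit hN), hz).
  exists p, (inner (A z) e), (inner (A z) z), s. repeat split; auto.
  - apply Rle_of_sqr_le; nra.
  - eapply Rle_trans; [apply cauchy_schwarz | rewrite he; lra].
  - eapply Rle_trans; [apply cauchy_schwarz | rewrite hz; lra].
  - replace (Cmod p * Cmod p + s * s) with (sqnorm (A e)) by lra.
    change (a - kap <= vnorm (A e)).
    assert (kap * kap / (2 * a) <= kap).
    { apply Rmult_le_reg_r with (r := 2 * a); [lra|].
      unfold Rdiv. rewrite Rmult_assoc, Rinv_l by lra. nra. }
    lra.
  - rewrite <- (inner_A_e_A_z e z p s hdec).
    exact (Cmod_inner_near_maximal hA hN kap e z ha (proj1 hk) he1 hz1 hez hAe2).
  - apply numrange_compression_form; auto.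
Qed.

(* The compression of A to span {e, A e}, for e almost attaining the norm with <A e, e>
   close to lam, is nondegenerate, so W(A) contains a disc around lam. *)
Lemma maxnumrange_not_boundary lam : maxnumrange A a lam -> ~ boundary (numrange A) lam.
Proof.
  intros hmax hbd. destruct gap_facts as [ha [hg [hk hrho]]].
  destruct (near_maximal_compression lam hmax)
    as [p [u [d [s [hpl [hpw [hs [hu [hd [hS [hY hQ]]]]]]]]]]].
  assert (hsig : 0 < sig) by (unfold sig; lra).
  pose proof (compression_nondegenerate _ _ _ _ hQ ltac:(lra) ltac:(lra) hS hY) as hnd.
  destruct (hbd (rho / 2)) as [_ [y [Hy Hyl]]]; [lra|]. apply Hy.
  replace y with (Cadd p (Csub y p)) by Cring.
  apply (compression_disc_in_numrange _ _ _ _ hQ); try lra.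
  pose proof (Cmod_sub_triangle y lam p) as Htri. rewrite (Cmod_sub_sym lam) in Htri. lra.
Qed.

End NumradiusBelowNorm.

Lemma numradius_dichotomy {H : HilbertSpace} (A : H -> H) (a : R) :
  (exists x : H, x <> vzero) ->
  (forall eta, 0 < eta -> exists x, vnorm x = 1 /\ a - eta < Cmod (inner (A x) x)) \/
  (exists w, 0 <= w < a /\ forall z, numrange A z -> Cmod z <= w).
Proof.
  intros [x0 Nx0].
  destruct (classic (forall eta, 0 < eta ->
                       exists x, vnorm x = 1 /\ a - eta < Cmod (inner (A x) x))) as [Hs|Hn];
    [left; exact Hs | right].
  apply not_all_ex_not in Hn. destruct Hn as [eta Hn]. apply imply_to_and in Hn.
  destruct Hn as [Heta Hn].
  assert (Hb : forall z, numrange A z -> Cmod z <= a - eta).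
  { intros z [x [Hx ->]]. apply Rnot_lt_le. intros Hlt. apply Hn. exists x. auto. }
  exists (a - eta). split; auto.
  pose proof (Hb _ (ex_intro _ _ (conj (normalize_unit x0 Nx0) eq_refl))).
  pose proof (Cmod_ge0 (inner (A (vscal (RtoC (/ vnorm x0)) x0)) (vscal (RtoC (/ vnorm x0)) x0))).
  lra.
Qed.

Theorem theorem2 (H : HilbertSpace) (A : H -> H) (nA : R) :
  (exists x : H, x <> vzero) ->
  bounded_linear A ->
  is_opnorm A nA ->
  ((exists lam, maxnumrange A nA lam /\ boundary (numrange A) lam) <-> normaloid A nA).
Proof.
  intros hne hA hN. split.
  - intros [lam [hmax hbd]].
    destruct (numradius_dichotomy A nA hne) as [Hsup | [w [[hw hwa] hW]]].
    + exact (numradius_eq_norm_normaloid A nA hN (opnorm_ge0 hN hne) Hsup).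
    + exfalso. exact (maxnumrange_not_boundary hA hN w hw hwa hW lam hmax hbd).
  - intros [lam [hsp hl]]. exists lam.
    pose proof (spectrum_circle_approx_eigenvalue hA hN lam hne hsp hl) as hap.
    split; [exact (approx_eigenvalue_maxnumrange lam hl hap)
           | exact (approx_eigenvalue_boundary hN lam hl hap)].
Qed.
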